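(* Let $p>0$, $k>0$ and $q=p\,e^{-2k^2}$ with $0<pq<1$, let $\zeta\in\mathbb R$, $\varrho\in\mathbb C$, $t\in\mathbb C$, $x\in\mathbb R$, and assume $p\,e^{-(2\zeta-(\operatorname{Im}\varrho)^2)k^2}<1$. Then $$E^{(\zeta+\varrho^2/2)}_{p,q}\big(te^{-\varrho kx}\big)e^{-x^2/2}=\frac1{\sqrt{2\pi}}\int_{-\infty}^{\infty}e^{ixy-y^2/2}E^{(\zeta)}_{p,q}\big(te^{i\varrho ky}\big)\,dy,$$ where for complex $s$ we set $E^{(s)}_{p,q}(z)=\sum_{n\ge0}e^{-s k^2n^2}\frac{z^n}{[p,q;p,q]_n}$ (which agrees with the definition below when $s$ is real, since $q/p=e^{-2k^2}$).
   Context: $[p,q;p,q]_n=\prod_{l=1}^n(p^{-l}-q^l)$ ($=1$ for $n=0$). For real $\zeta$, $E^{(\zeta)}_{p,q}(z)=\sum_{n\ge0}\big(\frac qp\big)^{\zeta n^2/2}\frac{z^n}{[p,q;p,q]_n}$. *)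

From Stdlib Require Import Reals.
Open Scope R_scope.

Definition Cx := (R * R)%type.
Definition Cre (z : Cx) : R := fst z.
Definition Cim (z : Cx) : R := snd z.
Definition RtoC (a : R) : Cx := (a, 0).
Definition Ci : Cx := (0, 1).
Definition Cadd (z w : Cx) : Cx := (fst z + fst w, snd z + snd w).
Definition Copp (z : Cx) : Cx := (- fst z, - snd z).
Definition Cmul (z w : Cx) : Cx :=
  (fst z * fst w - snd z * snd w, fst z * snd w + snd z * fst w).
Definition Cscale (a : R) (z : Cx) : Cx := (a * fst z, a * snd z).
Definition Cnorm (z : Cx) : R := sqrt (fst z * fst z + snd z * snd z).
Definition Cexp (z : Cx) : Cx := (exp (fst z) * cos (snd z), exp (fst z) * sin (snd z)).
Fixpoint Cpow (z : Cx) (n : nat) : Cx :=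
  match n with O => (1, 0) | S m => Cmul z (Cpow z m) end.

Definition Ccv (u : nat -> Cx) (l : Cx) : Prop :=
  forall eps : R, eps > 0 -> exists N : nat, forall n : nat, (n >= N)%nat ->
    Cnorm (Cadd (u n) (Copp l)) < eps.

Fixpoint Cpartial (a : nat -> Cx) (n : nat) : Cx :=
  match n with O => a O | S m => Cadd (Cpartial a m) (a (S m)) end.
Definition Csums (a : nat -> Cx) (l : Cx) : Prop := Ccv (Cpartial a) l.

(* [p,q;p,q]_n = prod_{l=1}^n (p^{-l} - q^l) *)
Fixpoint pqfact (p q : R) (n : nat) : R :=
  match n with
  | O => 1
  | S m => pqfact p q m * (/ p ^ (S m) - q ^ (S m))
  end.

Definition Eterm (k p q : R) (s z : Cx) (n : nat) : Cx :=
  Cscale (/ pqfact p q n)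
    (Cmul (Cexp (Cscale (- (k ^ 2 * INR n ^ 2)) s)) (Cpow z n)).

Definition E_is (k p q : R) (s z v : Cx) : Prop := Csums (Eterm k p q s z) v.

Definition is_RInt (g : R -> R) (a b v : R) : Prop :=
  exists pr : Riemann_integrable g a b, RiemannInt pr = v.

Definition C_RInt (f : R -> Cx) (a b : R) (v : Cx) : Prop :=
  is_RInt (fun y => fst (f y)) a b (fst v) /\ is_RInt (fun y => snd (f y)) a b (snd v).

Definition C_improper (f : R -> Cx) (I : Cx) : Prop :=
  (forall a b : R, a <= b -> exists v : Cx, C_RInt f a b v) /\
  (forall eps : R, eps > 0 -> exists M : R, forall a b : R, forall v : Cx,
     a <= - M -> M <= b -> C_RInt f a b v -> Cnorm (Cadd v (Copp I)) < eps).

(* For real y the n-th term of E^(zeta)_{p,q}(t e^{i rho k y}), multiplied by e^{ixy - y^2/2},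
   is c_n e^{-y^2/2 + (a_n + i b_n) y} with a_n + i b_n = i (x + n k rho) and
   c_n = e^{-zeta k^2 n^2} t^n / [p,q;p,q]_n.  Completing the square, each such term integrates to
   sqrt(2 pi) c_n e^{-(x + n k rho)^2/2}, and
     -(x + n k rho)^2/2 = -x^2/2 - (rho^2/2) k^2 n^2 - n rho k x
   turns the series of these integrals into sqrt(2 pi) e^{-x^2/2} E^(zeta + rho^2/2)(t e^{-rho k x}).
   Integration term by term is Tannery's theorem: the n-th term on |y| <= r and its integral are
   both bounded by multiples of |c_n| e^{n^2 k^2 (Im rho)^2/2 + n k |Im rho| r}, and
   [p,q;p,q]_n >= (1 - pq)^n p^{-n(n+1)/2} makes these bounds summable as soon as
   p e^{-(2 zeta - (Im rho)^2) k^2} < 1.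
   The Gaussian integrals themselves come from int e^{-y^2/2} = sqrt(2 pi), the even moments,
   the Taylor series of cos and oddness of sin. *)

From Stdlib Require Import Reals Lra Lia FunctionalExtensionality ClassicalEpsilon Factorial.
Open Scope R_scope.

(** * Riemann integrals *)

Lemma is_RInt_ext f g a b v : (forall y, f y = g y) -> is_RInt f a b v -> is_RInt g a b v.
Proof. intros H; replace g with f by (apply functional_extensionality; auto); auto. Qed.

Lemma is_RInt_unique f a b v w : is_RInt f a b v -> is_RInt f a b w -> v = w.
Proof. intros [p1 <-] [p2 <-]; apply RiemannInt_P5. Qed.

Lemma is_RInt_const c a b : is_RInt (fun _ => c) a b (c * (b - a)).
Proof. exists (RiemannInt_P14 a b c); apply RiemannInt_P15. Qed.

Lemma is_RInt_zero a b : is_RInt (fun _ => 0) a b 0.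
Proof. pose proof (is_RInt_const 0 a b) as H; now rewrite Rmult_0_l in H. Qed.

Lemma is_RInt_point f a : is_RInt f a a 0.
Proof. exists (RiemannInt_P7 f a); apply RiemannInt_P9. Qed.

Lemma is_RInt_lin f g a b l u v : is_RInt f a b u -> is_RInt g a b v ->
  is_RInt (fun y => f y + l * g y) a b (u + l * v).
Proof. intros [p1 <-] [p2 <-]. exists (RiemannInt_P10 l p1 p2); apply RiemannInt_P13. Qed.

Lemma is_RInt_scal f a b l u : is_RInt f a b u -> is_RInt (fun y => l * f y) a b (l * u).
Proof.
 intros H. rewrite <- (Rplus_0_l (l * u)).
 apply is_RInt_ext with (fun y => 0 + l * f y); [intros; ring|].
 apply is_RInt_lin; [apply is_RInt_zero | exact H].
Qed.

Lemma is_RInt_add f g a b u v : is_RInt f a b u -> is_RInt g a b v ->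
  is_RInt (fun y => f y + g y) a b (u + v).
Proof.
 intros Hf Hg. replace (u + v) with (u + 1 * v) by ring.
 apply is_RInt_ext with (fun y => f y + 1 * g y); [intros; ring|]. now apply is_RInt_lin.
Qed.

Lemma is_RInt_sub f g a b u v : is_RInt f a b u -> is_RInt g a b v ->
  is_RInt (fun y => f y - g y) a b (u - v).
Proof.
 intros Hf Hg. replace (u - v) with (u + -1 * v) by ring.
 apply is_RInt_ext with (fun y => f y + -1 * g y); [intros; ring|]. now apply is_RInt_lin.
Qed.

Lemma is_RInt_chasles f a b c u v : is_RInt f a b u -> is_RInt f b c v -> is_RInt f a c (u + v).
Proof. intros [p1 <-] [p2 <-]. exists (RiemannInt_P24 p1 p2); symmetry; apply RiemannInt_P26. Qed.

Lemma is_RInt_swap f a b u : is_RInt f a b u -> is_RInt f b a (- u).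
Proof.
 intros [p1 <-]. exists (RiemannInt_P1 p1).
 rewrite (RiemannInt_P8 p1 (RiemannInt_P1 p1)); ring.
Qed.

Lemma is_RInt_le f g a b u v : a <= b -> (forall y, a < y < b -> f y <= g y) ->
  is_RInt f a b u -> is_RInt g a b v -> u <= v.
Proof. intros Hab H [p1 <-] [p2 <-]; now apply RiemannInt_P19. Qed.

Lemma is_RInt_abs_le f g a b u v : a <= b -> (forall y, a < y < b -> Rabs (f y) <= g y) ->
  is_RInt f a b u -> is_RInt g a b v -> Rabs u <= v.
Proof.
 intros Hab H [p1 <-] [p2 <-].
 apply Rle_trans with (RiemannInt (RiemannInt_P16 p1)).
 - now apply RiemannInt_P17.
 - now apply RiemannInt_P19.
Qed.

Lemma continuity_Riemann_integrable f a b : continuity f -> Riemann_integrable f a b.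
Proof.
 intros Hf. destruct (Rle_dec a b).
 - now apply continuity_implies_RiemannInt.
 - apply RiemannInt_P1, continuity_implies_RiemannInt; auto; lra.
Qed.

Definition RInt_cont f (Hf : continuity f) (a b : R) : R :=
  RiemannInt (continuity_Riemann_integrable f a b Hf).

Lemma is_RInt_RInt_cont f (Hf : continuity f) a b : is_RInt f a b (RInt_cont f Hf a b).
Proof. eexists; reflexivity. Qed.

Lemma ex_RInt_continuity f a b : continuity f -> exists v, is_RInt f a b v.
Proof. intros Hf; exists (RInt_cont f Hf a b); apply is_RInt_RInt_cont. Qed.

Lemma is_RInt_derive_le f F a b : a <= b -> continuity f ->
  (forall y, derivable_pt_lim F y (f y)) -> is_RInt f a b (F b - F a).
Proof.
 intros hab Hf HF.
 assert (Hc : forall y, a <= y <= b -> continuity_pt f y) by (intros; apply Hf).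
 assert (HF' : antiderivative f F a b).
 { split; auto. intros y _. exists (exist _ (f y) (HF y)). reflexivity. }
 destruct (antiderivative_Ucte _ _ _ _ _ HF' (RiemannInt_P29 hab Hc)) as [c Hc'].
 exists (continuity_implies_RiemannInt hab Hc).
 rewrite (RiemannInt_P20 hab (FTC_P1 hab Hc) (continuity_implies_RiemannInt hab Hc)).
 rewrite (Hc' a), (Hc' b) by lra. ring.
Qed.

Lemma is_RInt_derive f F a b : continuity f ->
  (forall y, derivable_pt_lim F y (f y)) -> is_RInt f a b (F b - F a).
Proof.
 intros Hf HF. destruct (Rle_dec a b).
 - now apply is_RInt_derive_le.
 - replace (F b - F a) with (- (F a - F b)) by ring.
   apply is_RInt_swap, is_RInt_derive_le; auto; lra.
Qed.

Lemma derivable_pt_lim_locally g h y l :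
  (exists d, 0 < d /\ forall z, Rabs (z - y) < d -> g z = h z) ->
  derivable_pt_lim h y l -> derivable_pt_lim g y l.
Proof.
 intros [d [Hd E]] H eps Heps. destruct (H eps Heps) as [del Hdel].
 assert (Hm : 0 < Rmin del d) by (apply Rmin_pos; [apply del | lra]).
 exists (mkposreal _ Hm). intros e He0 He. simpl in He.
 rewrite (E (y + e)), (E y).
 - apply Hdel; auto. apply Rlt_le_trans with (1 := He), Rmin_l.
 - rewrite Rminus_diag, Rabs_R0; lra.
 - replace (y + e - y) with e by ring. apply Rlt_le_trans with (1 := He), Rmin_r.
Qed.

Lemma RInt_cont_derive f (Hf : continuity f) c y :
  derivable_pt_lim (fun s => RInt_cont f Hf c s) y (f y).
Proof.
 assert (hab : y - 1 <= y + 1) by lra.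
 assert (Hc : forall z, y - 1 <= z <= y + 1 -> continuity_pt f z) by (intros; apply Hf).
 set (pr := FTC_P1 hab Hc).
 apply derivable_pt_lim_locally with (fun s => RInt_cont f Hf c (y - 1) + primitive hab pr s).
 - exists 1; split; [lra|]. intros z Hz. apply Rabs_def2 in Hz.
   unfold primitive. destruct (Rle_dec (y - 1) z) as [r|]; [|lra].
   destruct (Rle_dec z (y + 1)) as [r0|]; [|lra].
   apply (is_RInt_unique f c z); [apply is_RInt_RInt_cont|].
   apply is_RInt_chasles with (y - 1); [apply is_RInt_RInt_cont | exists (pr z r r0); reflexivity].
 - rewrite <- (Rplus_0_l (f y)). apply derivable_pt_lim_plus.
   + apply derivable_pt_lim_const.
   + apply RiemannInt_P27; lra.
Qed.

Lemma derivable_pt_lim_affine l m y : derivable_pt_lim (fun u => l * u + m) y l.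
Proof.
 intros eps He. exists (mkposreal eps He). intros h Hh _.
 replace ((l * (y + h) + m - (l * y + m)) / h - l) with 0 by (field; auto).
 now rewrite Rabs_R0.
Qed.

Lemma is_RInt_comp_lin f a b l m v : continuity f ->
  is_RInt f (l * a + m) (l * b + m) v -> is_RInt (fun u => l * f (l * u + m)) a b v.
Proof.
 intros Hf Hv. set (P := fun s => RInt_cont f Hf 0 s).
 rewrite (is_RInt_unique _ _ _ _ _ Hv (is_RInt_derive f P _ _ Hf (RInt_cont_derive f Hf 0))).
 apply (is_RInt_derive _ (fun u => P (l * u + m))).
 - intros y. apply continuity_pt_mult; [apply continuity_pt_const; now intros ? ?|].
   apply (continuity_pt_comp (fun u => l * u + m) f); [reg | apply Hf].
 - intros y. rewrite Rmult_comm.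
   apply (derivable_pt_lim_comp (fun u => l * u + m) P); [|apply RInt_cont_derive].
   apply derivable_pt_lim_affine.
Qed.

(** * Improper integrals over the line *)

Definition is_RInt_improper (f : R -> R) (I : R) : Prop :=
  (forall a b, a <= b -> exists v, is_RInt f a b v) /\
  (forall eps, eps > 0 -> exists M, forall a b v,
     a <= - M -> M <= b -> is_RInt f a b v -> Rabs (v - I) < eps).

Lemma is_RInt_improper_ext f g I : (forall y, f y = g y) ->
  is_RInt_improper f I -> is_RInt_improper g I.
Proof. intros H; replace g with f by (apply functional_extensionality; auto); auto. Qed.

Lemma is_RInt_improper_lin f g I J l : is_RInt_improper f I -> is_RInt_improper g J ->
  is_RInt_improper (fun y => f y + l * g y) (I + l * J).
Proof.
 intros [Ef Hf] [Eg Hg]. split.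
 { intros a b Hab. destruct (Ef a b Hab) as [u Hu], (Eg a b Hab) as [w Hw].
   exists (u + l * w); now apply is_RInt_lin. }
 intros eps He. set (e := eps / 2 / (Rabs l + 1)). pose proof (Rabs_pos l).
 assert (He' : e > 0) by (apply Rdiv_lt_0_compat; lra).
 assert (Hle : Rabs l * e <= eps / 2).
 { replace (eps / 2) with ((Rabs l + 1) * e) by (unfold e; field; lra).
   apply Rmult_le_compat_r; lra. }
 destruct (Hf (eps / 2) ltac:(lra)) as [M1 H1], (Hg e He') as [M2 H2].
 exists (Rabs M1 + Rabs M2). intros a b v Ha Hb Hv.
 pose proof (Rle_abs M1); pose proof (Rle_abs M2); pose proof (Rabs_pos M1); pose proof (Rabs_pos M2).
 destruct (Ef a b ltac:(lra)) as [u Hu], (Eg a b ltac:(lra)) as [w Hw].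
 rewrite (is_RInt_unique _ _ _ _ _ Hv (is_RInt_lin _ _ _ _ l _ _ Hu Hw)).
 specialize (H1 a b u ltac:(lra) ltac:(lra) Hu). specialize (H2 a b w ltac:(lra) ltac:(lra) Hw).
 replace (u + l * w - (I + l * J)) with ((u - I) + l * (w - J)) by ring.
 eapply Rle_lt_trans; [apply Rabs_triang|]. rewrite Rabs_mult.
 assert (Rabs l * Rabs (w - J) <= Rabs l * e) by (apply Rmult_le_compat_l; lra).
 lra.
Qed.

Lemma is_RInt_improper_zero : is_RInt_improper (fun _ => 0) 0.
Proof.
 split; [intros a b _; exists 0; apply is_RInt_zero|].
 intros eps He. exists 0. intros a b v _ _ Hv.
 rewrite (is_RInt_unique _ _ _ _ _ Hv (is_RInt_zero a b)), Rminus_diag, Rabs_R0; lra.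
Qed.

Lemma is_RInt_improper_scal f I l : is_RInt_improper f I ->
  is_RInt_improper (fun y => l * f y) (l * I).
Proof.
 intros H. rewrite <- (Rplus_0_l (l * I)).
 apply is_RInt_improper_ext with (fun y => 0 + l * f y); [intros; ring|].
 apply is_RInt_improper_lin; [apply is_RInt_improper_zero | exact H].
Qed.

Lemma is_RInt_improper_comp_shift f I c : continuity f -> is_RInt_improper f I ->
  is_RInt_improper (fun y => f (y + c)) I.
Proof.
 intros Hc [_ Hf].
 assert (Hsh : forall a b w, is_RInt f (a + c) (b + c) w -> is_RInt (fun y => f (y + c)) a b w).
 { intros a b w Hw. rewrite <- (Rmult_1_l a), <- (Rmult_1_l b) in Hw.
   apply (is_RInt_comp_lin f a b 1 c w Hc) in Hw.
   apply is_RInt_ext with (2 := Hw). intros y. rewrite !Rmult_1_l. reflexivity. }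
 split.
 { intros a b _. destruct (ex_RInt_continuity f (a + c) (b + c) Hc) as [w Hw].
   exists w; now apply Hsh. }
 intros eps He. destruct (Hf eps He) as [M HM].
 exists (M + Rabs c). intros a b v Ha Hb Hv.
 destruct (ex_RInt_continuity f (a + c) (b + c) Hc) as [w Hw].
 rewrite (is_RInt_unique _ _ _ _ _ Hv (Hsh _ _ _ Hw)).
 pose proof (Rle_abs c); pose proof (Rle_abs (- c)); rewrite Rabs_Ropp in *.
 apply (HM (a + c) (b + c) w); auto; lra.
Qed.

Lemma is_RInt_improper_abs_bound f I B : is_RInt_improper f I ->
  (forall a b v, a <= b -> is_RInt f a b v -> Rabs v <= B) -> Rabs I <= B.
Proof.
 intros [Ef Hf] HB. apply Rnot_lt_le. intros Hlt.
 destruct (Hf (Rabs I - B) ltac:(lra)) as [M HM].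
 pose proof (Rabs_pos M); pose proof (Rle_abs M); pose proof (Rle_abs (- M)); rewrite Rabs_Ropp in *.
 destruct (Ef (- Rabs M) (Rabs M) ltac:(lra)) as [v Hv].
 specialize (HM (- Rabs M) (Rabs M) v ltac:(lra) ltac:(lra) Hv).
 specialize (HB (- Rabs M) (Rabs M) v ltac:(lra) Hv).
 pose proof (Rabs_triang_inv I v). rewrite Rabs_minus_sym in HM. lra.
Qed.

Lemma is_RInt_le_improper h J a b w : (forall y, 0 <= h y) -> is_RInt_improper h J ->
  a <= b -> is_RInt h a b w -> w <= J.
Proof.
 intros Hh [Eh Hi] Hab Hw. apply Rnot_lt_le. intros Hlt.
 destruct (Hi (w - J) ltac:(lra)) as [M HM].
 pose proof (Rmin_l a (- Rabs M)); pose proof (Rmin_r a (- Rabs M)).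
 pose proof (Rmax_l b (Rabs M)); pose proof (Rmax_r b (Rabs M)); pose proof (Rle_abs M).
 set (A := Rmin a (- Rabs M)) in *. set (B := Rmax b (Rabs M)) in *.
 destruct (Eh A a ltac:(lra)) as [w1 Hw1], (Eh b B ltac:(lra)) as [w2 Hw2].
 assert (0 <= w1) by (apply (is_RInt_le (fun _ => 0) h A a); auto; apply is_RInt_zero).
 assert (0 <= w2) by (apply (is_RInt_le (fun _ => 0) h b B); auto; apply is_RInt_zero).
 assert (HAB : is_RInt h A B (w1 + w + w2)) by (do 2 (eapply is_RInt_chasles; eauto)).
 specialize (HM A B _ ltac:(lra) ltac:(lra) HAB).
 apply Rabs_def2 in HM. lra.
Qed.

Lemma is_RInt_improper_tail f I : is_RInt_improper f I -> forall eps, eps > 0 ->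
  exists M, forall c d v, M <= c -> M <= d -> is_RInt f c d v -> Rabs v < eps.
Proof.
 intros [Ef Hf] eps He. destruct (Hf (eps / 2) ltac:(lra)) as [M HM].
 exists (Rabs M). intros c d v Hc Hd Hv.
 pose proof (Rabs_pos M); pose proof (Rle_abs M); pose proof (Rle_abs (- M)); rewrite Rabs_Ropp in *.
 destruct (Ef (- Rabs M) c ltac:(lra)) as [u Hu].
 assert (Hud := HM (- Rabs M) d (u + v) ltac:(lra) ltac:(lra) (is_RInt_chasles _ _ _ _ _ _ Hu Hv)).
 assert (Hc' := HM (- Rabs M) c u ltac:(lra) ltac:(lra) Hu).
 apply Rabs_def2 in Hud; apply Rabs_def2 in Hc'. apply Rabs_def1; lra.
Qed.

Lemma is_RInt_odd g c : continuity g -> (forall y, g (- y) = - g y) -> is_RInt g (- c) c 0.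
Proof.
 intros Hg Hodd. destruct (ex_RInt_continuity g c (- c) Hg) as [v Hv].
 assert (Hv' : is_RInt g (- c) c v).
 { assert (H : is_RInt g (-1 * - c + 0) (-1 * c + 0) v)
     by (replace (-1 * - c + 0) with c by ring; replace (-1 * c + 0) with (- c) by ring; exact Hv).
   apply is_RInt_comp_lin in H; [|exact Hg].
   apply is_RInt_ext with (2 := H). intros u.
   replace (-1 * u + 0) with (- u) by ring. rewrite Hodd. ring. }
 pose proof (is_RInt_unique _ _ _ _ _ Hv' (is_RInt_swap _ _ _ _ Hv)).
 replace 0 with v by lra. exact Hv'.
Qed.

Lemma is_RInt_improper_odd g h J : continuity g -> (forall y, g (- y) = - g y) ->
  (forall y, Rabs (g y) <= h y) -> is_RInt_improper h J -> is_RInt_improper g 0.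
Proof.
 intros Hg Hodd Hgh Hh. split; [intros a b _; now apply ex_RInt_continuity|].
 intros eps He. destruct (is_RInt_improper_tail h J Hh eps He) as [M HM].
 exists (Rabs M). intros a b v Ha Hb Hv. rewrite Rminus_0_r.
 pose proof (Rabs_pos M); pose proof (Rle_abs M).
 assert (Hv' : is_RInt g (- a) b v).
 { rewrite <- (Rplus_0_l v). apply is_RInt_chasles with a; [now apply is_RInt_odd | exact Hv]. }
 destruct Hh as [Eh _]. destruct (Rle_dec (- a) b).
 - destruct (Eh (- a) b r) as [w Hw].
   apply Rle_lt_trans with w; [apply (is_RInt_abs_le g h (- a) b); auto|].
   eapply Rle_lt_trans; [apply Rle_abs | apply (HM (- a) b); auto; lra].
 - destruct (Eh b (- a) ltac:(lra)) as [w Hw]. rewrite <- Rabs_Ropp.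
   apply Rle_lt_trans with w; [apply (is_RInt_abs_le g h b (- a)); auto; [lra | now apply is_RInt_swap]|].
   eapply Rle_lt_trans; [apply Rle_abs | apply (HM b (- a)); auto; lra].
Qed.

(** * Series and Tannery's theorem *)

Definition summable (a : nat -> R) : Prop := exists l, Un_cv (sum_f_R0 a) l.

Lemma Un_cv_const c : Un_cv (fun _ => c) c.
Proof. intros eps He; exists O; intros; unfold Rdist; rewrite Rminus_diag, Rabs_R0; lra. Qed.

Lemma Un_cv_sum_ext a b l : (forall n, a n = b n) ->
  Un_cv (sum_f_R0 a) l -> Un_cv (sum_f_R0 b) l.
Proof. intros H; replace b with a by (apply functional_extensionality; auto); auto. Qed.

Lemma Un_cv_sum_scal a l c : Un_cv (sum_f_R0 a) l ->
  Un_cv (sum_f_R0 (fun n => c * a n)) (c * l).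
Proof.
 intros H. replace (sum_f_R0 (fun n => c * a n)) with (fun N => c * sum_f_R0 a N).
 - apply CV_mult; [apply Un_cv_const | exact H].
 - apply functional_extensionality; intros N. rewrite scal_sum. apply sum_eq; intros; ring.
Qed.

Lemma Un_cv_sum_lin a b la lb c d : Un_cv (sum_f_R0 a) la -> Un_cv (sum_f_R0 b) lb ->
  Un_cv (sum_f_R0 (fun n => c * a n + d * b n)) (c * la + d * lb).
Proof.
 intros Ha Hb. replace (sum_f_R0 (fun n => c * a n + d * b n))
   with (fun N => sum_f_R0 (fun n => c * a n) N + sum_f_R0 (fun n => d * b n) N).
 - apply CV_plus; now apply Un_cv_sum_scal.
 - apply functional_extensionality; intros N. now rewrite plus_sum.
Qed.

Lemma summable_abs_le a b : (forall n, Rabs (a n) <= b n) -> summable b -> summable a.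
Proof.
 intros H [l Hl].
 destruct (Rseries_CV_comp (fun n => Rabs (a n)) b) as [l' Hl'].
 - intros n; split; [apply Rabs_pos | auto].
 - exists l; exact Hl.
 - destruct (cv_cauchy_2 a) as [s Hs]; [apply cauchy_abs, cv_cauchy_1; now exists l'|].
   now exists s.
Qed.

Lemma summable_le a b : (forall n, 0 <= a n <= b n) -> summable b -> summable a.
Proof. intros H Hb. apply (summable_abs_le a b); auto. intros n. rewrite Rabs_right; [apply H | apply Rle_ge, H]. Qed.

Lemma summable_geom_half : summable (fun n => (1 / 2) ^ n).
Proof.
 exists (/ (1 - 1 / 2)). assert (H := GP_infinite (1 / 2) ltac:(rewrite Rabs_right; lra)).
 intros eps He. destruct (H eps He) as [N HN]. exists N. intros n Hn.
 replace (sum_f_R0 (fun n => (1 / 2) ^ n) n) with (sum_f_R0 (fun i => 1 * (1 / 2) ^ i) n)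
   by (apply sum_eq; intros; ring).
 apply (HN n Hn).
Qed.

(* Eventually lam^n mu <= 1/2, so the terms are eventually below (1/2)^n. *)
Lemma summable_pow_sq lam mu : 0 <= lam < 1 -> 0 <= mu -> summable (fun n => lam ^ (n * n) * mu ^ n).
Proof.
 intros Hl Hm.
 destruct (pow_lt_1_zero lam ltac:(rewrite Rabs_right; lra) (/ (2 * (mu + 1))) ltac:(apply Rinv_0_lt_compat; lra))
   as [N0 HN0].
 pose proof (Rmax_l 1 mu); pose proof (Rmax_r 1 mu). set (mu' := Rmax 1 mu) in *.
 set (C := (2 * mu') ^ N0).
 apply summable_le with (fun n => C * (1 / 2) ^ n).
 2:{ destruct summable_geom_half as [l Hl']. exists (C * l). now apply Un_cv_sum_scal. }
 intros n. split; [apply Rmult_le_pos; apply pow_le; lra|].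
 rewrite pow_mult, <- Rpow_mult_distr.
 assert (Hln : 0 <= lam ^ n <= 1) by (split; [apply pow_le; lra | rewrite <- (pow1 n); apply pow_incr; lra]).
 destruct (Compare_dec.le_lt_dec N0 n) as [Hn|Hn].
 - specialize (HN0 n Hn). rewrite Rabs_right in HN0 by (apply Rle_ge, pow_le; lra).
   assert (lam ^ n * mu <= 1 / 2).
   { apply Rle_trans with (/ (2 * (mu + 1)) * mu); [apply Rmult_le_compat_r; lra|].
     apply (Rmult_le_reg_l (2 * (mu + 1))); [lra|]. rewrite <- Rmult_assoc, Rinv_r by lra. lra. }
   assert (1 <= C) by (apply pow_R1_Rle; lra).
   apply Rle_trans with ((1 / 2) ^ n); [apply pow_incr; split; [apply Rmult_le_pos|]; lra|].
   pose proof (pow_le (1 / 2) n ltac:(lra)). nra.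
 - apply Rle_trans with (mu' ^ N0).
   + apply Rle_trans with (mu' ^ n); [apply pow_incr; split; [apply Rmult_le_pos|]; nra|].
     apply Rle_pow; [lra | lia].
   + unfold C. rewrite Rpow_mult_distr.
     assert (1 <= 2 ^ N0 * (1 / 2) ^ n).
     { replace N0 with (n + (N0 - n))%nat by lia. rewrite pow_add.
       replace (2 ^ n * 2 ^ (N0 - n) * (1 / 2) ^ n) with ((2 * (1 / 2)) ^ n * 2 ^ (N0 - n))
         by (rewrite Rpow_mult_distr; ring).
       replace (2 * (1 / 2)) with 1 by field. rewrite pow1, Rmult_1_l. apply pow_R1_Rle; lra. }
     pose proof (pow_le mu' N0 ltac:(lra)). nra.
Qed.

Lemma Un_cv_sum_tail a B eps : Un_cv (sum_f_R0 a) B -> eps > 0 ->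
  exists N, forall K, (N <= K)%nat -> B - sum_f_R0 a K < eps.
Proof.
 intros HB He. destruct (HB eps He) as [N HN]. exists N; intros K HK.
 specialize (HN K HK). unfold Rdist in HN. apply Rabs_def2 in HN. lra.
Qed.

Lemma sum_f_R0_abs_bound c d N : (forall n, (n <= N)%nat -> Rabs (c n) <= d) ->
  Rabs (sum_f_R0 c N) <= INR (S N) * d.
Proof.
 intros H. eapply Rle_trans; [apply Rsum_abs|].
 rewrite Rmult_comm, <- sum_cte. now apply sum_Rle.
Qed.

Lemma continuity_sum_f_R0 (f : nat -> R -> R) K : (forall n, continuity (f n)) ->
  continuity (fun y => sum_f_R0 (fun n => f n y) K).
Proof.
 intros Hf. induction K as [|K IH]; simpl; [apply Hf|].
 now apply (continuity_plus (fun y => sum_f_R0 (fun n => f n y) K)).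
Qed.

Lemma is_RInt_sum_f_R0 (f : nat -> R -> R) v a b K : (forall n, is_RInt (f n) a b (v n)) ->
  is_RInt (fun y => sum_f_R0 (fun n => f n y) K) a b (sum_f_R0 v K).
Proof.
 intros H. induction K as [|K IH]; simpl; [apply H|].
 now apply (is_RInt_add (fun y => sum_f_R0 (fun n => f n y) K)).
Qed.

Section Tannery.

Variables (f h : nat -> R -> R) (F : R -> R) (I beta : nat -> R).
Hypothesis f_cont : forall n, continuity (f n).
Hypothesis f_le_h : forall n y, Rabs (f n y) <= h n y.
Hypothesis f_sum : forall y, Un_cv (sum_f_R0 (fun n => f n y)) (F y).
Hypothesis f_int : forall n, is_RInt_improper (f n) (I n).
Hypothesis h_int : forall n, is_RInt_improper (h n) (beta n).
Hypothesis beta_sum : summable beta.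
Hypothesis h_loc : forall r, exists m, summable m /\ forall n y, Rabs y <= r -> h n y <= m n.

Lemma tannery_unif r eps : eps > 0 -> exists K0, forall K y, (K0 <= K)%nat -> Rabs y <= r ->
  Rabs (F y - sum_f_R0 (fun n => f n y) K) < eps.
Proof.
 intros He. destruct (h_loc (Rabs r)) as [m [[mS HmS] Hm]].
 destruct (Un_cv_sum_tail m mS eps HmS He) as [K0 HK0]. exists K0. intros K y HK Hy.
 eapply Rle_lt_trans; [|apply (HK0 K HK)].
 apply (sum_maj1 f m y (F y) mS K); [apply f_sum | exact HmS|].
 intros n. eapply Rle_trans; [apply f_le_h | apply Hm]. eapply Rle_trans; [exact Hy | apply Rle_abs].
Qed.

Lemma tannery_cont : continuity F.
Proof.
 intros y0 eps He.
 destruct (tannery_unif (Rabs y0 + 1) (eps / 3) ltac:(lra)) as [K HK].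
 destruct (continuity_sum_f_R0 f K f_cont y0 (eps / 3) ltac:(lra)) as [d [Hd Hdd]].
 exists (Rmin d 1). split; [apply Rmin_pos; lra|]. intros y [_ Hy]. simpl in *. unfold R_dist in *.
 pose proof (Rmin_l d 1); pose proof (Rmin_r d 1).
 assert (Hy1 : Rabs y <= Rabs y0 + 1).
 { pose proof (Rabs_triang (y - y0) y0). replace (y - y0 + y0) with y in * by ring. lra. }
 assert (A1 := HK K y (le_n _) Hy1).
 assert (A2 := HK K y0 (le_n _) ltac:(lra)).
 destruct (Req_dec y y0) as [->|Hne]; [rewrite Rminus_diag, Rabs_R0; lra|].
 assert (A3 := Hdd y ltac:(split; [split; [constructor | now apply not_eq_sym] | lra])).
 apply Rabs_def2 in A1; apply Rabs_def2 in A2; apply Rabs_def2 in A3. apply Rabs_def1; lra.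
Qed.

Lemma tannery_RInt a b v vn : a <= b -> is_RInt F a b v ->
  (forall n, is_RInt (f n) a b (vn n)) -> Un_cv (sum_f_R0 vn) v.
Proof.
 intros Hab Hv Hvn eps He. set (e := eps / (b - a + 1)).
 assert (He' : e > 0) by (apply Rdiv_lt_0_compat; lra).
 destruct (tannery_unif (Rmax (Rabs a) (Rabs b)) e He') as [K0 HK0].
 exists K0. intros K HK. unfold Rdist. rewrite Rabs_minus_sym.
 assert (Hd : is_RInt (fun y => F y - sum_f_R0 (fun n => f n y) K) a b (v - sum_f_R0 vn K))
   by (apply is_RInt_sub; [exact Hv | now apply is_RInt_sum_f_R0]).
 eapply Rle_lt_trans;
   [apply (is_RInt_abs_le (fun y => F y - sum_f_R0 (fun n => f n y) K) (fun _ => e) a b _ _ Hab);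
    [|exact Hd | apply is_RInt_const]|].
 - intros y Hy. left. apply HK0; auto. apply Rabs_le.
   pose proof (Rmax_l (Rabs a) (Rabs b)); pose proof (Rmax_r (Rabs a) (Rabs b)).
   pose proof (Rle_abs b); pose proof (Rle_abs (- a)); rewrite Rabs_Ropp in *. lra.
 - replace eps with (e * (b - a + 1)) by (unfold e; field; lra). nra.
Qed.

Lemma tannery_beta n a b v : a <= b -> is_RInt (f n) a b v -> Rabs v <= beta n.
Proof.
 intros Hab Hv. destruct (h_int n) as [Eh _]. destruct (Eh a b Hab) as [w Hw].
 assert (Hh0 : forall y, 0 <= h n y) by (intros y; eapply Rle_trans; [apply Rabs_pos | apply f_le_h]).
 apply Rle_trans with w; [apply (is_RInt_abs_le (f n) (h n) a b); auto|].
 now apply is_RInt_le_improper with (h n) a b.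
Qed.

Lemma tannery_uniform_finite N eps : eps > 0 -> exists M, 0 <= M /\
  forall n a b v, (n <= N)%nat -> a <= - M -> M <= b -> is_RInt (f n) a b v -> Rabs (v - I n) < eps.
Proof.
 intros He. induction N as [|N [M [HM0 HM]]].
 - destruct (proj2 (f_int 0) eps He) as [M HM]. exists (Rabs M). split; [apply Rabs_pos|].
   intros n a b v Hn Ha Hb Hv. replace n with O in * by lia.
   pose proof (Rle_abs M); pose proof (Rle_abs (- M)); rewrite Rabs_Ropp in *.
   apply (HM a b v); auto; lra.
 - destruct (proj2 (f_int (S N)) eps He) as [M' HM']. exists (Rmax M (Rabs M')).
   pose proof (Rmax_l M (Rabs M')); pose proof (Rmax_r M (Rabs M')).
   pose proof (Rle_abs M'); pose proof (Rle_abs (- M')); rewrite Rabs_Ropp in *.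
   split; [lra|]. intros n a b v Hn Ha Hb Hv. destruct (Nat.eq_dec n (S N)) as [->|Hne].
   + apply (HM' a b v); auto; lra.
   + apply (HM n a b v); auto; lia || lra.
Qed.

Theorem tannery : exists l, Un_cv (sum_f_R0 I) l /\ is_RInt_improper F l.
Proof.
 destruct beta_sum as [B HB].
 assert (HIb : forall n, Rabs (I n) <= beta n)
   by (intros n; apply (is_RInt_improper_abs_bound (f n)); [apply f_int | apply tannery_beta]).
 destruct (summable_abs_le I beta HIb (ex_intro _ B HB)) as [l HS].
 exists l. split; [exact HS|]. split; [intros a b _; apply ex_RInt_continuity, tannery_cont|].
 intros eps He. destruct (Un_cv_sum_tail beta B (eps / 4) HB ltac:(lra)) as [N HN].
 set (e := eps / 2 / INR (S N)).
 assert (He' : e > 0) by (apply Rdiv_lt_0_compat; [lra | apply lt_0_INR; lia]).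
 destruct (tannery_uniform_finite N e He') as [M [HM0 HM]].
 exists M. intros a b v Ha Hb Hv.
 set (vn := fun n => RInt_cont (f n) (f_cont n) a b).
 assert (Hvn : Un_cv (sum_f_R0 (fun n => vn n - I n)) (v - l)).
 { apply Un_cv_sum_ext with (fun n => 1 * vn n + -1 * I n); [intros; ring|].
   replace (v - l) with (1 * v + -1 * l) by ring. apply Un_cv_sum_lin; auto.
   apply (tannery_RInt a b); auto; [lra | intros; apply is_RInt_RInt_cont]. }
 assert (Htail := sum_maj1 (fun n _ => vn n - I n) (fun n => 2 * beta n) 0 _ _ N Hvn
   (Un_cv_sum_scal _ _ 2 HB)).
 assert (Hhead : Rabs (sum_f_R0 (fun n => vn n - I n) N) <= INR (S N) * e).
 { apply sum_f_R0_abs_bound. intros n Hn. left.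
   apply (HM n a b); auto. apply is_RInt_RInt_cont. }
 assert (Hbn : forall n, Rabs (vn n - I n) <= 2 * beta n).
 { intros n. eapply Rle_trans; [apply Rabs_triang|]. rewrite Rabs_Ropp.
   pose proof (tannery_beta n a b (vn n) ltac:(lra) (is_RInt_RInt_cont _ _ _ _)). pose proof (HIb n). lra. }
 specialize (Htail Hbn). unfold SP in Htail.
 replace (sum_f_R0 (fun n => 2 * beta n) N) with (2 * sum_f_R0 beta N) in Htail
   by (rewrite scal_sum; apply sum_eq; intros; ring).
 replace (INR (S N) * e) with (eps / 2) in Hhead by (unfold e; field; apply not_0_INR; lia).
 specialize (HN N (le_n _)).
 pose proof (Rabs_triang (v - l - sum_f_R0 (fun n => vn n - I n) N) (sum_f_R0 (fun n => vn n - I n) N)).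
 replace (v - l - _ + _) with (v - l) in * by ring. lra.
Qed.

End Tannery.

(** * The Gaussian integral *)

Lemma derivable_pt_lim_eq f y l l' : derivable_pt_lim f y l -> l = l' -> derivable_pt_lim f y l'.
Proof. now intros H <-. Qed.

Lemma derivable_pt_lim_exp_sq c y :
  derivable_pt_lim (fun s => exp (c * s ^ 2)) y (2 * c * y * exp (c * y ^ 2)).
Proof.
 apply derivable_pt_lim_eq with (exp (c * y ^ 2) * (0 * y ^ 2 + c * (INR 2 * y ^ pred 2))).
 - apply (derivable_pt_lim_comp (fun s => c * s ^ 2) exp); [|apply derivable_pt_lim_exp].
   apply (derivable_pt_lim_mult (fun _ => c) (fun s => s ^ 2));
     [apply derivable_pt_lim_const | apply derivable_pt_lim_pow].
 - simpl; ring.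
Qed.

Lemma exp_le x y : x <= y -> exp x <= exp y.
Proof. intros [H|<-]; [left; now apply exp_increasing | right; reflexivity]. Qed.

Lemma exp_mult_INR n a : exp (INR n * a) = exp a ^ n.
Proof.
 induction n as [|n IH]; simpl pow; [now rewrite Rmult_0_l, exp_0|].
 rewrite S_INR, <- IH, <- exp_plus. f_equal; ring.
Qed.

Lemma derivable_pt_lim_RInt_param (h h1 : R -> R -> R) (Hh : forall t, continuity (h t))
  (Hh1 : forall t, continuity (h1 t)) t C : 0 <= C ->
  (forall u d, 0 <= u <= 1 -> Rabs d <= 1 -> Rabs (h (t + d) u - h t u - d * h1 t u) <= C * d ^ 2) ->
  derivable_pt_lim (fun s => RInt_cont (h s) (Hh s) 0 1) t (RInt_cont (h1 t) (Hh1 t) 0 1).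
Proof.
 intros HC Hb eps He.
 assert (Hd : 0 < Rmin 1 (eps / (C + 1))) by (apply Rmin_pos; [lra | apply Rdiv_lt_0_compat; lra]).
 exists (mkposreal _ Hd). intros d Hd0 Hdl. simpl in Hdl.
 pose proof (Rmin_l 1 (eps / (C + 1))); pose proof (Rmin_r 1 (eps / (C + 1))).
 set (A := RInt_cont (h (t + d)) (Hh (t + d)) 0 1).
 set (B := RInt_cont (h t) (Hh t) 0 1). set (D := RInt_cont (h1 t) (Hh1 t) 0 1).
 assert (E : is_RInt (fun u => h (t + d) u - h t u - d * h1 t u) 0 1 (A - B - d * D))
   by (repeat apply is_RInt_sub; try apply is_RInt_scal; apply is_RInt_RInt_cont).
 assert (Bd : Rabs (A - B - d * D) <= C * d ^ 2 * (1 - 0)).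
 { apply (is_RInt_abs_le (fun u => h (t + d) u - h t u - d * h1 t u) (fun _ => C * d ^ 2) 0 1);
   [lra | intros u Hu; apply Hb; lra | exact E | apply is_RInt_const]. }
 assert (Hpd : 0 < Rabs d) by now apply Rabs_pos_lt.
 replace ((A - B) / d - D) with ((A - B - d * D) / d) by (field; auto).
 unfold Rdiv. rewrite Rabs_mult, Rabs_inv.
 apply Rle_lt_trans with (C * Rabs d).
 - apply (Rmult_le_reg_r (Rabs d)); auto. rewrite Rmult_assoc, Rinv_l, Rmult_1_r by lra.
   rewrite Rmult_assoc, <- (pow2_abs d) in Bd. simpl in Bd |- *. lra.
 - apply Rle_lt_trans with ((C + 1) * Rabs d); [nra|].
   replace eps with ((C + 1) * (eps / (C + 1))) by (field; lra).
   apply Rmult_lt_compat_l; lra.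
Qed.

Definition gauss (y : R) : R := exp (- (y ^ 2 / 2)).

Lemma continuity_gauss : continuity gauss.
Proof. unfold gauss; reg. Qed.

Lemma gauss_pos y : 0 < gauss y.
Proof. apply exp_pos. Qed.

Lemma gauss_le_1 y : gauss y <= 1.
Proof. unfold gauss. rewrite <- exp_0. apply exp_le. pose proof (pow2_ge_0 y); lra. Qed.

Definition gauss_prim (t : R) : R := RInt_cont gauss continuity_gauss 0 t.

Lemma gauss_prim_derive t : derivable_pt_lim gauss_prim t (gauss t).
Proof. apply RInt_cont_derive. Qed.

Lemma is_RInt_gauss a b : is_RInt gauss a b (gauss_prim b - gauss_prim a).
Proof. apply is_RInt_derive; [apply continuity_gauss | apply gauss_prim_derive]. Qed.

Lemma gauss_prim_0 : gauss_prim 0 = 0.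
Proof. apply (is_RInt_unique gauss 0 0); [apply is_RInt_RInt_cont | apply is_RInt_point]. Qed.

(* With Phi(t) = int_0^t e^{-y^2/2} and H(t) = int_0^1 kernel t u du one has H' = -e^{-t^2/2} Phi,
   so Phi^2 + 2 H is constant, equal to 2 H(0) = pi/2; since 0 <= H(t) <= e^{-t^2/2},
   Phi(t) tends to sqrt(pi/2). *)
Definition kernel (t u : R) : R := exp (- (1 + u ^ 2) / 2 * t ^ 2) / (1 + u ^ 2).
Definition kernel_dt (t u : R) : R := - t * exp (- (1 + u ^ 2) / 2 * t ^ 2).
Definition kernel_dt2 (t u : R) : R := ((1 + u ^ 2) * t ^ 2 - 1) * exp (- (1 + u ^ 2) / 2 * t ^ 2).

Lemma continuity_kernel t : continuity (kernel t).
Proof. unfold kernel. reg. intros u; pose proof (pow2_ge_0 u); lra. Qed.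

Lemma continuity_kernel_dt t : continuity (kernel_dt t).
Proof. unfold kernel_dt. reg. Qed.

Lemma kernel_derive u t : derivable_pt_lim (fun s => kernel s u) t (kernel_dt t u).
Proof.
 unfold kernel, kernel_dt. pose proof (pow2_ge_0 u).
 apply derivable_pt_lim_eq with
   (2 * (- (1 + u ^ 2) / 2) * t * exp (- (1 + u ^ 2) / 2 * t ^ 2) * / (1 + u ^ 2)
    + exp (- (1 + u ^ 2) / 2 * t ^ 2) * 0).
 - apply (derivable_pt_lim_mult (fun s => exp (- (1 + u ^ 2) / 2 * s ^ 2)) (fun _ => / (1 + u ^ 2))).
   + apply derivable_pt_lim_exp_sq.
   + apply derivable_pt_lim_const.
 - field. lra.
Qed.

Lemma kernel_dt_derive u t : derivable_pt_lim (fun s => kernel_dt s u) t (kernel_dt2 t u).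
Proof.
 unfold kernel_dt, kernel_dt2.
 apply derivable_pt_lim_eq with
   ((-1) * exp (- (1 + u ^ 2) / 2 * t ^ 2)
    + - t * (2 * (- (1 + u ^ 2) / 2) * t * exp (- (1 + u ^ 2) / 2 * t ^ 2))).
 - apply (derivable_pt_lim_mult (fun s => - s) (fun s => exp (- (1 + u ^ 2) / 2 * s ^ 2))).
   + apply derivable_pt_lim_eq with (- (1)); [apply (derivable_pt_lim_opp id), derivable_pt_lim_id | ring].
   + apply derivable_pt_lim_exp_sq.
 - field.
Qed.

Lemma kernel_dt2_bound t u : Rabs (kernel_dt2 t u) <= 3.
Proof.
 unfold kernel_dt2. set (s := (1 + u ^ 2) * t ^ 2).
 assert (Hs : 0 <= s) by (unfold s; pose proof (pow2_ge_0 u); pose proof (pow2_ge_0 t); nra).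
 replace (- (1 + u ^ 2) / 2 * t ^ 2) with (- (s / 2)) by (unfold s; field).
 assert (E1 : exp (- (s / 2)) <= 1) by (rewrite <- exp_0; apply exp_le; lra).
 assert (E2 : s * exp (- (s / 2)) <= 2).
 { rewrite exp_Ropp. pose proof (exp_ineq1_le (s / 2)). pose proof (exp_pos (s / 2)).
   apply (Rmult_le_reg_r (exp (s / 2))); auto. rewrite Rmult_assoc, Rinv_l by lra. lra. }
 pose proof (exp_pos (- (s / 2))).
 rewrite Rabs_mult, (Rabs_right (exp _)) by lra.
 apply Rle_trans with ((s + 1) * exp (- (s / 2))); [|lra].
 apply Rmult_le_compat_r; [lra|]. apply Rabs_le; lra.
Qed.

Lemma kernel_taylor t u d : Rabs (kernel (t + d) u - kernel t u - d * kernel_dt t u) <= 3 * d ^ 2.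
Proof.
 assert (Lip : forall s, Rabs (kernel_dt s u - kernel_dt t u) <= 3 * Rabs (s - t)).
 { intros s. destruct (MVT_abs (fun s => kernel_dt s u) (fun s => kernel_dt2 s u) t s) as [c [Hc _]].
   - intros; apply kernel_dt_derive.
   - rewrite Hc. apply Rmult_le_compat_r; [apply Rabs_pos | apply kernel_dt2_bound]. }
 destruct (MVT_abs (fun e => kernel (t + e) u - kernel t u - e * kernel_dt t u)
   (fun e => kernel_dt (t + e) u - kernel_dt t u) 0 d) as [c [Hc Hcd]].
 { intros c _.
   apply derivable_pt_lim_eq with (kernel_dt (t + c) u * 1 - 0 - (1 * kernel_dt t u + c * 0)); [|ring].
   apply (derivable_pt_lim_minus (fun e => kernel (t + e) u - kernel t u) (fun e => e * kernel_dt t u)).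
   - apply (derivable_pt_lim_minus (fun e => kernel (t + e) u) (fun _ => kernel t u));
       [|apply derivable_pt_lim_const].
     apply (derivable_pt_lim_comp (fun e => t + e) (fun s => kernel s u)); [|apply kernel_derive].
     apply derivable_pt_lim_eq with (0 + 1); [|ring].
     apply (derivable_pt_lim_plus (fun _ => t) (fun e => e)); [apply derivable_pt_lim_const | apply derivable_pt_lim_id].
   - apply (derivable_pt_lim_mult (fun e => e) (fun _ => kernel_dt t u));
       [apply derivable_pt_lim_id | apply derivable_pt_lim_const]. }
 rewrite Rplus_0_r, Rmult_0_l, !Rminus_diag, !Rminus_0_r in Hc. rewrite Hc.
 eapply Rle_trans; [apply Rmult_le_compat_r; [apply Rabs_pos | apply Lip]|].
 replace (t + c - t) with c by ring.
 assert (Hcd' : Rabs c <= Rabs d).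
 { destruct (Rle_dec 0 d).
   - rewrite Rmin_left, Rmax_right in Hcd by lra. rewrite !Rabs_right; lra.
   - rewrite Rmin_right, Rmax_left in Hcd by lra. rewrite !Rabs_left1; lra. }
 rewrite <- pow2_abs. pose proof (Rabs_pos c). nra.
Qed.

Definition gauss_aux (t : R) : R := RInt_cont (kernel t) (continuity_kernel t) 0 1.

Lemma kernel_split t u : exp (- (1 + u ^ 2) / 2 * t ^ 2) = gauss t * gauss (t * u + 0).
Proof. unfold gauss. rewrite <- exp_plus. f_equal. field. Qed.

Lemma gauss_aux_derive t : derivable_pt_lim gauss_aux t (- gauss t * gauss_prim t).
Proof.
 apply derivable_pt_lim_eq with (RInt_cont (kernel_dt t) (continuity_kernel_dt t) 0 1).
 { apply derivable_pt_lim_RInt_param with 3; [lra | intros; apply kernel_taylor]. }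
 apply (is_RInt_unique (kernel_dt t) 0 1); [apply is_RInt_RInt_cont|].
 assert (E : is_RInt gauss (t * 0 + 0) (t * 1 + 0) (gauss_prim t)).
 { replace (t * 0 + 0) with 0 by ring. replace (t * 1 + 0) with t by ring.
   unfold gauss_prim. apply is_RInt_RInt_cont. }
 apply is_RInt_comp_lin in E; [|apply continuity_gauss].
 apply is_RInt_scal with (l := - gauss t) in E.
 apply is_RInt_ext with (2 := E). intros u. unfold kernel_dt. rewrite kernel_split. ring.
Qed.

Lemma gauss_aux_0 : gauss_aux 0 = PI / 4.
Proof.
 apply (is_RInt_unique (kernel 0) 0 1); [apply is_RInt_RInt_cont|].
 rewrite <- atan_1. replace (atan 1) with (atan 1 - atan 0) by (rewrite atan_0; ring).
 apply is_RInt_derive; [apply continuity_kernel|]. intros u.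
 apply derivable_pt_lim_eq with (/ (1 + u ^ 2)); [apply derivable_pt_lim_atan|].
 unfold kernel. replace (- (1 + u ^ 2) / 2 * 0 ^ 2) with 0 by ring. rewrite exp_0.
 field. pose proof (pow2_ge_0 u); lra.
Qed.

Lemma gauss_prim_sq_aux t : gauss_prim t ^ 2 + 2 * gauss_aux t = PI / 2.
Proof.
 set (D := fun s => gauss_prim s ^ 2 + 2 * gauss_aux s).
 assert (HD : forall s, derivable_pt_lim D s 0).
 { intros s. unfold D.
   apply derivable_pt_lim_eq with
     ((gauss s * gauss_prim s + gauss_prim s * gauss s) + (0 * gauss_aux s + 2 * (- gauss s * gauss_prim s)));
     [|ring].
   apply (derivable_pt_lim_plus (fun s => gauss_prim s ^ 2) (fun s => 2 * gauss_aux s)).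
   - replace (fun s => gauss_prim s ^ 2) with (fun s => gauss_prim s * gauss_prim s)
       by (apply functional_extensionality; intros; ring).
     apply (derivable_pt_lim_mult gauss_prim gauss_prim); apply gauss_prim_derive.
   - apply (derivable_pt_lim_mult (fun _ => 2) gauss_aux);
       [apply derivable_pt_lim_const | apply gauss_aux_derive]. }
 pose proof (is_RInt_unique _ _ _ _ _ (is_RInt_derive (fun _ => 0) D 0 t ltac:(reg) HD) (is_RInt_zero 0 t)).
 assert (D 0 = PI / 2) by (unfold D; rewrite gauss_prim_0, gauss_aux_0; field).
 change (D t = PI / 2). lra.
Qed.

Lemma gauss_aux_bounds t : 0 <= gauss_aux t <= gauss t.
Proof.
 split.
 - apply (is_RInt_le (fun _ => 0) (kernel t) 0 1); [lra| |apply is_RInt_zero | apply is_RInt_RInt_cont].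
   intros u _. unfold kernel. apply Rlt_le, Rdiv_lt_0_compat; [apply exp_pos|].
   pose proof (pow2_ge_0 u); lra.
 - apply Rle_trans with (gauss t * (1 - 0)); [|right; ring].
   apply (is_RInt_le (kernel t) (fun _ => gauss t) 0 1); [lra| |apply is_RInt_RInt_cont | apply is_RInt_const].
   intros u _. unfold kernel. rewrite kernel_split.
   pose proof (gauss_pos t); pose proof (gauss_le_1 (t * u + 0)); pose proof (gauss_pos (t * u + 0)).
   pose proof (pow2_ge_0 u). apply (Rmult_le_reg_r (1 + u ^ 2)); [lra|].
   unfold Rdiv. rewrite Rmult_assoc, Rinv_l by lra. nra.
Qed.

Lemma gauss_prim_nonneg t : 0 <= t -> 0 <= gauss_prim t.
Proof.
 intros Ht. replace (gauss_prim t) with (gauss_prim t - gauss_prim 0) by (rewrite gauss_prim_0; ring).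
 apply (is_RInt_le (fun _ => 0) gauss 0 t); auto; [intros; left; apply gauss_pos | apply is_RInt_zero | apply is_RInt_gauss].
Qed.

Lemma gauss_prim_opp t : gauss_prim (- t) = - gauss_prim t.
Proof.
 assert (E : is_RInt gauss (-1 * 0 + 0) (-1 * t + 0) (gauss_prim (- t) - gauss_prim 0)).
 { replace (-1 * 0 + 0) with 0 by ring. replace (-1 * t + 0) with (- t) by ring. apply is_RInt_gauss. }
 apply is_RInt_comp_lin in E; [|apply continuity_gauss].
 assert (E' := is_RInt_scal _ _ _ (-1) _ (is_RInt_gauss 0 t)).
 apply (is_RInt_ext _ (fun u => -1 * gauss (-1 * u + 0))) in E'.
 - pose proof (is_RInt_unique _ _ _ _ _ E E'). rewrite gauss_prim_0 in *. lra.
 - intros u. unfold gauss. replace ((-1 * u + 0) ^ 2) with (u ^ 2) by ring. reflexivity.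
Qed.

Lemma gauss_prim_limit t : 0 <= t ->
  Rabs (gauss_prim t - sqrt (PI / 2)) <= 2 * gauss t / sqrt (PI / 2).
Proof.
 intros Ht. assert (HP : 0 < PI / 2) by (pose proof PI_RGT_0; lra).
 set (s := sqrt (PI / 2)). assert (Hs : 0 < s) by now apply sqrt_lt_R0.
 assert (Hss : s * s = PI / 2) by (apply sqrt_sqrt; lra).
 pose proof (gauss_prim_sq_aux t); pose proof (gauss_aux_bounds t); pose proof (gauss_prim_nonneg t Ht).
 replace (gauss_prim t - s) with ((gauss_prim t ^ 2 - s * s) / (gauss_prim t + s)) by (field; lra).
 unfold Rdiv. rewrite Rabs_mult, Rabs_inv, (Rabs_right (gauss_prim t + s)) by lra.
 apply Rle_trans with (Rabs (gauss_prim t ^ 2 - s * s) * / s).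
 - apply Rmult_le_compat_l; [apply Rabs_pos | apply Rinv_le_contravar; lra].
 - apply Rmult_le_compat_r; [left; now apply Rinv_0_lt_compat|]. rewrite Rabs_left1; lra.
Qed.

Lemma gauss_small eps : eps > 0 -> exists M, 0 <= M /\ forall y, M <= Rabs y -> gauss y < eps.
Proof.
 intros He. pose proof (Rmax_l 2 (/ eps)); pose proof (Rmax_r 2 (/ eps)).
 set (M := Rmax 2 (/ eps)) in *. exists M. split; [lra|].
 intros y Hy. pose proof (Rabs_pos y).
 apply Rle_lt_trans with (exp (- M)).
 - apply exp_le. unfold gauss. rewrite <- pow2_abs. nra.
 - rewrite exp_Ropp. pose proof (exp_ineq1_le M). pose proof (exp_pos M).
   apply (Rmult_lt_reg_r (exp M)); [lra|]. rewrite Rinv_l by lra.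
   assert (1 <= eps * M) by (apply Rle_trans with (eps * / eps); [right; field; lra | apply Rmult_le_compat_l; lra]).
   nra.
Qed.

Theorem is_RInt_improper_gauss : is_RInt_improper gauss (sqrt (2 * PI)).
Proof.
 split; [intros a b _; apply ex_RInt_continuity, continuity_gauss|].
 intros eps He. assert (HP : 0 < PI / 2) by (pose proof PI_RGT_0; lra).
 set (s := sqrt (PI / 2)). assert (Hs : 0 < s) by now apply sqrt_lt_R0.
 destruct (gauss_small (eps * s / 4)) as [M [HM0 HM]]; [apply Rdiv_lt_0_compat; [nra | lra]|].
 exists M. intros a b v Ha Hb Hv.
 rewrite (is_RInt_unique _ _ _ _ _ Hv (is_RInt_gauss a b)).
 replace (sqrt (2 * PI)) with (2 * s).
 2:{ unfold s. replace (2 * PI) with (2 * 2 * (PI / 2)) by field.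
     rewrite sqrt_mult, sqrt_square by lra. reflexivity. }
 rewrite <- (Ropp_involutive a), gauss_prim_opp.
 replace (gauss_prim b - - gauss_prim (- a) - 2 * s) with ((gauss_prim b - s) + (gauss_prim (- a) - s)) by ring.
 eapply Rle_lt_trans; [apply Rabs_triang|].
 assert (Lb := gauss_prim_limit b ltac:(lra)); assert (La := gauss_prim_limit (- a) ltac:(lra)).
 change (sqrt (PI / 2)) with s in Lb, La.
 pose proof (HM b ltac:(rewrite Rabs_right; lra)); pose proof (HM (- a) ltac:(rewrite Rabs_right; lra)).
 assert (2 * gauss b / s < eps / 2) by (apply (Rmult_lt_reg_r s); auto; field_simplify; lra).
 assert (2 * gauss (- a) / s < eps / 2) by (apply (Rmult_lt_reg_r s); auto; field_simplify; lra).
 lra.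
Qed.

(** * Moments and Fourier transform of the Gaussian *)

Lemma Un_cv_exp_series x : Un_cv (sum_f_R0 (fun i => / INR (fact i) * x ^ i)) (exp x).
Proof. unfold exp. now destruct (exist_exp x). Qed.

Lemma exp_ge_pow x j : 0 <= x -> x ^ j / INR (fact j) <= exp x.
Proof.
 intros Hx. assert (Hn : forall i, 0 <= / INR (fact i) * x ^ i).
 { intros i. apply Rmult_le_pos; [left; apply Rinv_0_lt_compat, INR_fact_lt_0 | now apply pow_le]. }
 apply Rle_trans with (sum_f_R0 (fun i => / INR (fact i) * x ^ i) j).
 - destruct j; simpl; [lra|]. pose proof (cond_pos_sum _ j Hn). unfold Rdiv. lra.
 - apply sum_incr; auto. apply Un_cv_exp_series.
Qed.

(* By [exp_ge_pow], |y^k e^{-y^2/2}| <= (k+1)! 2^(k+1) / |y|^(k+2). *)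
Lemma pow_gauss_small k eps : eps > 0 ->
  exists M, 0 <= M /\ forall y, M <= Rabs y -> Rabs (y ^ k * gauss y) < eps.
Proof.
 intros He. set (C := INR (fact (S k)) * 2 ^ S k).
 assert (HC : 0 < C) by (apply Rmult_lt_0_compat; [apply INR_fact_lt_0 | apply pow_lt; lra]).
 pose proof (Rmax_l 1 (C / eps + 1)); pose proof (Rmax_r 1 (C / eps + 1)).
 set (M := Rmax 1 (C / eps + 1)) in *. exists M. split; [lra|].
 intros y Hy. set (r := Rabs y) in *.
 rewrite Rabs_mult, <- RPow_abs, (Rabs_right (gauss y)) by (left; apply gauss_pos). fold r.
 assert (Hexp : r ^ (2 * S k) / 2 ^ S k / INR (fact (S k)) <= exp (y ^ 2 / 2)).
 { replace (r ^ (2 * S k) / 2 ^ S k) with ((y ^ 2 / 2) ^ S k).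
   - apply exp_ge_pow. pose proof (pow2_ge_0 y); lra.
   - unfold r. rewrite pow_mult, pow2_abs. unfold Rdiv. rewrite Rpow_mult_distr, pow_inv. reflexivity. }
 unfold gauss. rewrite exp_Ropp.
 apply Rle_lt_trans with (r ^ k * / (r ^ (2 * S k) / 2 ^ S k / INR (fact (S k)))).
 { apply Rmult_le_compat_l; [apply pow_le; lra|]. apply Rinv_le_contravar; auto.
   repeat apply Rdiv_lt_0_compat; try apply pow_lt; try apply INR_fact_lt_0; lra. }
 replace (r ^ k * / (r ^ (2 * S k) / 2 ^ S k / INR (fact (S k)))) with (C / r ^ S (S k)).
 2:{ unfold C. replace (2 * S k)%nat with (k + S (S k))%nat by lia. rewrite pow_add. field.
     repeat split; first [apply pow_nonzero; lra | apply INR_fact_neq_0]. }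
 assert (r <= r ^ S (S k)) by (rewrite <- (pow_1 r) at 1; apply Rle_pow; [lra | lia]).
 apply Rle_lt_trans with (C / r); [apply Rmult_le_compat_l; [lra | apply Rinv_le_contravar; lra]|].
 apply (Rmult_lt_reg_r r); [lra|]. unfold Rdiv. rewrite Rmult_assoc, Rinv_l by lra.
 apply Rlt_le_trans with (eps * (C / eps + 1)); [|apply Rmult_le_compat_l; lra].
 replace (eps * (C / eps + 1)) with (C + eps) by (field; lra). lra.
Qed.

Lemma continuity_pow_gauss m : continuity (fun y => y ^ m * gauss y).
Proof. unfold gauss; reg. Qed.

Lemma pow_gauss_derive m y :
  derivable_pt_lim (fun s => - (s ^ S m * gauss s)) y
    (y ^ S (S m) * gauss y - INR (S m) * (y ^ m * gauss y)).
Proof.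
 unfold gauss.
 replace (fun s => - (s ^ S m * exp (- (s ^ 2 / 2)))) with (fun s => - (s ^ S m * exp (-(1/2) * s ^ 2)))
   by (apply functional_extensionality; intros; do 4 f_equal; field).
 apply derivable_pt_lim_eq with
   (- (INR (S m) * y ^ pred (S m) * exp (-(1/2) * y ^ 2) + y ^ S m * (2 * (-(1/2)) * y * exp (-(1/2) * y ^ 2)))).
 - apply (derivable_pt_lim_opp (fun s => s ^ S m * exp (-(1/2) * s ^ 2))).
   apply (derivable_pt_lim_mult (fun s => s ^ S m) (fun s => exp (-(1/2) * s ^ 2)));
     [apply derivable_pt_lim_pow | apply derivable_pt_lim_exp_sq].
 - replace (-(1/2) * y ^ 2) with (- (y ^ 2 / 2)) by field. simpl. field.
Qed.

Lemma is_RInt_improper_pow_gauss_SS m J : is_RInt_improper (fun y => y ^ m * gauss y) J ->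
  is_RInt_improper (fun y => y ^ S (S m) * gauss y) (INR (S m) * J).
Proof.
 intros [Em Hm]. split; [intros a b _; apply ex_RInt_continuity, continuity_pow_gauss|].
 intros eps He. assert (HSm : 0 < INR (S m)) by (apply lt_0_INR; lia).
 destruct (Hm (eps / 3 / INR (S m))) as [M1 H1]; [apply Rdiv_lt_0_compat; lra|].
 destruct (pow_gauss_small (S m) (eps / 3) ltac:(lra)) as [M2 [HM2 H2]].
 exists (Rabs M1 + M2). intros a b v Ha Hb Hv.
 pose proof (Rle_abs M1); pose proof (Rle_abs (- M1)); pose proof (Rabs_pos M1); rewrite Rabs_Ropp in *.
 set (P := fun y => - (y ^ S m * gauss y)).
 destruct (Em a b ltac:(lra)) as [w Hw].
 assert (E : is_RInt (fun y => y ^ S (S m) * gauss y) a b (P b - P a + INR (S m) * w)).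
 { apply is_RInt_ext with (fun y => (y ^ S (S m) * gauss y - INR (S m) * (y ^ m * gauss y))
                                     + INR (S m) * (y ^ m * gauss y)); [intros; ring|].
   apply is_RInt_lin; [|exact Hw]. apply is_RInt_derive; [unfold gauss; reg|].
   apply pow_gauss_derive. }
 rewrite (is_RInt_unique _ _ _ _ _ Hv E).
 specialize (H1 a b w ltac:(lra) ltac:(lra) Hw).
 assert (Ha2 : Rabs (P a) < eps / 3) by (unfold P; rewrite Rabs_Ropp; apply H2; rewrite Rabs_left1; lra).
 assert (Hb2 : Rabs (P b) < eps / 3) by (unfold P; rewrite Rabs_Ropp; apply H2; rewrite Rabs_right; lra).
 assert (Rabs (INR (S m) * (w - J)) <= eps / 3).
 { rewrite Rabs_mult, Rabs_right by lra.
   replace (eps / 3) with (INR (S m) * (eps / 3 / INR (S m))) by (field; lra).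
   apply Rmult_le_compat_l; lra. }
 replace (P b - P a + INR (S m) * w - INR (S m) * J) with (P b + - P a + INR (S m) * (w - J)) by ring.
 pose proof (Rabs_triang (P b + - P a) (INR (S m) * (w - J))); pose proof (Rabs_triang (P b) (- P a)).
 rewrite Rabs_Ropp in *. lra.
Qed.

Definition gauss_moment (j : nat) : R := INR (fact (2 * j)) / (2 ^ j * INR (fact j)) * sqrt (2 * PI).

Lemma is_RInt_improper_gauss_moment j :
  is_RInt_improper (fun y => y ^ (2 * j) * gauss y) (gauss_moment j).
Proof.
 induction j as [|j IH].
 - unfold gauss_moment; simpl.
   apply is_RInt_improper_ext with gauss; [intros; ring|].
   replace (1 / (1 * 1) * sqrt (2 * PI)) with (sqrt (2 * PI)) by field. apply is_RInt_improper_gauss.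
 - replace (2 * S j)%nat with (S (S (2 * j))) by lia.
   replace (gauss_moment (S j)) with (INR (S (2 * j)) * gauss_moment j).
   + now apply is_RInt_improper_pow_gauss_SS.
   + unfold gauss_moment. replace (2 * S j)%nat with (S (S (2 * j))) by lia.
     rewrite !fact_simpl, !mult_INR, !S_INR, mult_INR. simpl pow.
     replace (INR 2) with 2 by reflexivity. field. repeat split; first [apply pow_nonzero; lra | apply INR_fact_neq_0 | pose proof (pos_INR j); lra].
Qed.

Section GaussCos.

Variable be : R.

Let cos_term j y := gauss y * ((-1) ^ j / INR (fact (2 * j)) * (be * y) ^ (2 * j)).
Let cos_coef j := be ^ (2 * j) / INR (fact (2 * j)).
Let cos_dom j y := cos_coef j * (y ^ (2 * j) * gauss y).

Lemma cos_coef_moment j : cos_coef j * gauss_moment j = sqrt (2 * PI) * (/ INR (fact j) * (be ^ 2 / 2) ^ j).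
Proof.
 unfold cos_coef, gauss_moment. rewrite pow_mult. unfold Rdiv. rewrite Rpow_mult_distr, pow_inv.
 field. repeat split; first [apply pow_nonzero; lra | apply INR_fact_neq_0].
Qed.

Lemma cos_coef_bound j r : cos_coef j * r ^ (2 * j) <= / INR (fact j) * ((be * r) ^ 2) ^ j.
Proof.
 unfold cos_coef. rewrite <- pow_mult, Rpow_mult_distr.
 assert (0 <= be ^ (2 * j) * r ^ (2 * j)) by (rewrite <- Rpow_mult_distr, pow_mult; apply pow_le, pow2_ge_0).
 replace (be ^ (2 * j) / INR (fact (2 * j)) * r ^ (2 * j))
   with (be ^ (2 * j) * r ^ (2 * j) * / INR (fact (2 * j))) by (unfold Rdiv; ring).
 rewrite Rmult_comm. apply Rmult_le_compat_r; [exact H|].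
 apply Rinv_le_contravar; [apply INR_fact_lt_0 | apply le_INR, fact_le; lia].
Qed.

Lemma cos_coef_nonneg j : 0 <= cos_coef j.
Proof.
 unfold cos_coef. rewrite pow_mult. apply Rmult_le_pos; [apply pow_le, pow2_ge_0|].
 left; apply Rinv_0_lt_compat, INR_fact_lt_0.
Qed.

Lemma cos_term_eq j y : cos_term j y = (-1) ^ j * cos_dom j y.
Proof. unfold cos_term, cos_dom, cos_coef. rewrite Rpow_mult_distr. field. apply INR_fact_neq_0. Qed.

Lemma cos_dom_nonneg j y : 0 <= cos_dom j y.
Proof.
 pose proof (cos_coef_nonneg j); pose proof (gauss_pos y).
 assert (0 <= y ^ (2 * j)) by (rewrite pow_mult; apply pow_le, pow2_ge_0).
 apply Rmult_le_pos; [|apply Rmult_le_pos]; lra.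
Qed.

Lemma cos_dom_le j y r : Rabs y <= r -> cos_dom j y <= / INR (fact j) * ((be * r) ^ 2) ^ j.
Proof.
 intros Hy. eapply Rle_trans; [|apply cos_coef_bound]. apply Rmult_le_compat_l; [apply cos_coef_nonneg|].
 rewrite <- (Rmult_1_r (r ^ (2 * j))). apply Rmult_le_compat.
 - rewrite pow_mult; apply pow_le, pow2_ge_0.
 - left; apply gauss_pos.
 - rewrite !pow_mult, <- (pow2_abs y). apply pow_incr. split; [apply pow2_ge_0|].
   pose proof (Rabs_pos y). nra.
 - apply gauss_le_1.
Qed.

Theorem is_RInt_improper_gauss_cos :
  is_RInt_improper (fun y => gauss y * cos (be * y)) (sqrt (2 * PI) * exp (- (be ^ 2 / 2))).
Proof.
 destruct (tannery cos_term cos_dom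
   (fun y => gauss y * cos (be * y)) (fun j => (-1) ^ j * (cos_coef j * gauss_moment j))
   (fun j => cos_coef j * gauss_moment j)) as [l [Hl Himp]].
 - intros j. unfold cos_term, gauss. reg.
 - intros j y. rewrite cos_term_eq, Rabs_mult, pow_1_abs, Rmult_1_l, Rabs_right; [lra|].
   apply Rle_ge, cos_dom_nonneg.
 - intros y. apply Un_cv_sum_scal, A1_cvg.
 - intros j. apply is_RInt_improper_ext with (fun y => (-1) ^ j * cos_dom j y);
     [intros; symmetry; apply cos_term_eq|].
   do 2 apply is_RInt_improper_scal. apply is_RInt_improper_gauss_moment.
 - intros j. apply is_RInt_improper_scal, is_RInt_improper_gauss_moment.
 - exists (sqrt (2 * PI) * exp (be ^ 2 / 2)).
   apply Un_cv_sum_ext with (fun j => sqrt (2 * PI) * (/ INR (fact j) * (be ^ 2 / 2) ^ j));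
     [intros; symmetry; apply cos_coef_moment|].
   apply Un_cv_sum_scal, Un_cv_exp_series.
 - intros r. exists (fun j => / INR (fact j) * ((be * r) ^ 2) ^ j).
   split; [eexists; apply Un_cv_exp_series | intros j y; apply cos_dom_le].
 - replace (sqrt (2 * PI) * exp (- (be ^ 2 / 2))) with l; [exact Himp|].
   apply (UL_sequence (sum_f_R0 (fun j => (-1) ^ j * (cos_coef j * gauss_moment j)))); [exact Hl|].
   apply Un_cv_sum_ext with (fun j => sqrt (2 * PI) * (/ INR (fact j) * (- (be ^ 2 / 2)) ^ j)).
   + intros j. rewrite cos_coef_moment. replace (- (be ^ 2 / 2)) with (-1 * (be ^ 2 / 2)) by ring.
     rewrite Rpow_mult_distr. ring.
   + apply Un_cv_sum_scal, Un_cv_exp_series.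
Qed.

End GaussCos.

Theorem is_RInt_improper_gauss_sin be : is_RInt_improper (fun y => gauss y * sin (be * y)) 0.
Proof.
 apply is_RInt_improper_odd with gauss (sqrt (2 * PI)).
 - unfold gauss; reg.
 - intros y. unfold gauss. replace ((- y) ^ 2) with (y ^ 2) by ring.
   replace (be * - y) with (- (be * y)) by ring. rewrite sin_neg. ring.
 - intros y. rewrite Rabs_mult, (Rabs_right (gauss y)) by (left; apply gauss_pos).
   pose proof (gauss_pos y). pose proof (SIN_bound (be * y)).
   assert (Rabs (sin (be * y)) <= 1) by (apply Rabs_le; lra). nra.
 - apply is_RInt_improper_gauss.
Qed.

(** * Complex series and integrals *)

Definition Cnorm1 (z : Cx) : R := Rabs (fst z) + Rabs (snd z).

Lemma Cnorm1_nonneg z : 0 <= Cnorm1 z.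
Proof. unfold Cnorm1. pose proof (Rabs_pos (fst z)); pose proof (Rabs_pos (snd z)). lra. Qed.

Lemma Cnorm_le_Cnorm1 z : Cnorm z <= Cnorm1 z.
Proof.
 destruct z as [a b]. unfold Cnorm, Cnorm1; simpl. pose proof (Rabs_pos a); pose proof (Rabs_pos b).
 rewrite <- (sqrt_square (Rabs a + Rabs b)) by lra. apply sqrt_le_1_alt.
 pose proof (Rsqr_abs a); pose proof (Rsqr_abs b). unfold Rsqr in *. nra.
Qed.

Lemma Rabs_fst_le_Cnorm z : Rabs (fst z) <= Cnorm z.
Proof.
 destruct z as [a b]. unfold Cnorm; simpl. rewrite <- sqrt_Rsqr_abs.
 apply sqrt_le_1_alt. unfold Rsqr. pose proof (Rle_0_sqr b). unfold Rsqr in *. lra.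
Qed.

Lemma Rabs_snd_le_Cnorm z : Rabs (snd z) <= Cnorm z.
Proof.
 destruct z as [a b]. unfold Cnorm; simpl. rewrite <- sqrt_Rsqr_abs.
 apply sqrt_le_1_alt. unfold Rsqr. pose proof (Rle_0_sqr a). unfold Rsqr in *. lra.
Qed.

Lemma Ccv_iff u l : Ccv u l <->
  Un_cv (fun n => fst (u n)) (fst l) /\ Un_cv (fun n => snd (u n)) (snd l).
Proof.
 split.
 - intros H. split;
     (intros eps He; destruct (H eps He) as [N HN]; exists N; intros n Hn; unfold Rdist;
      eapply Rle_lt_trans; [|apply (HN n Hn)]).
   + apply (Rabs_fst_le_Cnorm (Cadd (u n) (Copp l))).
   + apply (Rabs_snd_le_Cnorm (Cadd (u n) (Copp l))).
 - intros [H1 H2] eps He.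
   destruct (H1 (eps / 2) ltac:(lra)) as [N1 HN1], (H2 (eps / 2) ltac:(lra)) as [N2 HN2].
   exists (N1 + N2)%nat. intros n Hn. eapply Rle_lt_trans; [apply Cnorm_le_Cnorm1|].
   specialize (HN1 n ltac:(lia)); specialize (HN2 n ltac:(lia)). unfold Rdist in *.
   unfold Cnorm1, Cadd, Copp; simpl. unfold Rminus in *. lra.
Qed.

Lemma Cpartial_eq a n :
  Cpartial a n = (sum_f_R0 (fun i => fst (a i)) n, sum_f_R0 (fun i => snd (a i)) n).
Proof. induction n as [|n IH]; simpl; [now destruct (a O)|]. now rewrite IH. Qed.

Lemma Csums_iff a l : Csums a l <->
  Un_cv (sum_f_R0 (fun n => fst (a n))) (fst l) /\ Un_cv (sum_f_R0 (fun n => snd (a n))) (snd l).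
Proof.
 unfold Csums. rewrite Ccv_iff.
 replace (fun n => fst (Cpartial a n)) with (sum_f_R0 (fun n => fst (a n)))
   by (apply functional_extensionality; intros n; now rewrite Cpartial_eq).
 replace (fun n => snd (Cpartial a n)) with (sum_f_R0 (fun n => snd (a n)))
   by (apply functional_extensionality; intros n; now rewrite Cpartial_eq).
 tauto.
Qed.

Lemma Csums_ext a b l : (forall n, a n = b n) -> Csums a l -> Csums b l.
Proof. intros H; replace b with a by (apply functional_extensionality; auto); auto. Qed.

Lemma Csums_Cmul c a l : Csums a l -> Csums (fun n => Cmul c (a n)) (Cmul c l).
Proof.
 rewrite !Csums_iff. destruct c as [c1 c2]. unfold Cmul; simpl. intros [H1 H2]. split.
 - apply Un_cv_sum_ext with (fun n => c1 * fst (a n) + - c2 * snd (a n)); [intros; ring|].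
   replace (c1 * fst l - c2 * snd l) with (c1 * fst l + - c2 * snd l) by ring.
   now apply Un_cv_sum_lin.
 - now apply Un_cv_sum_lin.
Qed.

Lemma Csums_abs_le a b : (forall n, Rabs (fst (a n)) <= b n /\ Rabs (snd (a n)) <= b n) ->
  summable b -> exists l, Csums a l.
Proof.
 intros H Hb.
 destruct (summable_abs_le (fun n => fst (a n)) b (fun n => proj1 (H n)) Hb) as [l1 H1].
 destruct (summable_abs_le (fun n => snd (a n)) b (fun n => proj2 (H n)) Hb) as [l2 H2].
 exists (l1, l2). now apply Csums_iff.
Qed.

Lemma Cscale_RtoC r z : Cscale r z = Cmul (RtoC r) z.
Proof. destruct z; unfold Cscale, Cmul, RtoC; simpl. f_equal; ring. Qed.

Lemma ex_C_RInt_swap f : (forall a b, a <= b -> exists v, C_RInt f a b v) ->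
  forall a b, exists v, C_RInt f a b v.
Proof.
 intros E a b. destruct (Rle_dec a b) as [Hab|Hab]; [now apply E|].
 destruct (E b a ltac:(lra)) as [[v1 v2] [H1 H2]].
 exists (- v1, - v2). split; now apply is_RInt_swap.
Qed.

Lemma C_improper_iff f I : C_improper f I <->
  is_RInt_improper (fun y => fst (f y)) (fst I) /\ is_RInt_improper (fun y => snd (f y)) (snd I).
Proof.
 split.
 - intros [E H]. pose proof (ex_C_RInt_swap f E) as E'.
   split; split; try (intros a b Hab; destruct (E a b Hab) as [v [Hv1 Hv2]]; eexists; eassumption);
     intros eps He; destruct (H eps He) as [M HM]; exists M; intros a b v Ha Hb Hv;
     destruct (E' a b) as [[w1 w2] [Hw1 Hw2]].
   + specialize (HM a b (v, w2) Ha Hb (conj Hv Hw2)).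
     eapply Rle_lt_trans; [|exact HM]. apply (Rabs_fst_le_Cnorm (Cadd (v, w2) (Copp I))).
   + specialize (HM a b (w1, v) Ha Hb (conj Hw1 Hv)).
     eapply Rle_lt_trans; [|exact HM]. apply (Rabs_snd_le_Cnorm (Cadd (w1, v) (Copp I))).
 - intros [[E1 H1] [E2 H2]]. split.
   + intros a b Hab. destruct (E1 a b Hab) as [v1 Hv1], (E2 a b Hab) as [v2 Hv2].
     now exists (v1, v2).
   + intros eps He. destruct (H1 (eps / 2) ltac:(lra)) as [M1 HM1], (H2 (eps / 2) ltac:(lra)) as [M2 HM2].
     exists (Rmax M1 M2). intros a b [v1 v2] Ha Hb [Hv1 Hv2].
     pose proof (Rmax_l M1 M2); pose proof (Rmax_r M1 M2).
     specialize (HM1 a b v1 ltac:(lra) ltac:(lra) Hv1); specialize (HM2 a b v2 ltac:(lra) ltac:(lra) Hv2).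
     eapply Rle_lt_trans; [apply Cnorm_le_Cnorm1|]. unfold Cnorm1, Cadd, Copp; simpl.
     unfold Rminus in *. lra.
Qed.

Lemma Cexp_add z w : Cexp (Cadd z w) = Cmul (Cexp z) (Cexp w).
Proof.
 destruct z as [a b], w as [c d]. unfold Cexp, Cadd, Cmul; simpl.
 rewrite exp_plus, cos_plus, sin_plus. f_equal; ring.
Qed.

Lemma Cexp_real a : Cexp (a, 0) = (exp a, 0).
Proof. unfold Cexp; simpl. rewrite cos_0, sin_0. f_equal; ring. Qed.

Lemma Cexp_ext z w : fst z = fst w -> snd z = snd w -> Cexp z = Cexp w.
Proof. destruct z, w; simpl; now intros -> ->. Qed.

Lemma Cpow_Cmul z w n : Cpow (Cmul z w) n = Cmul (Cpow z n) (Cpow w n).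
Proof.
 induction n as [|n IH]; simpl.
 - unfold Cmul; simpl. f_equal; ring.
 - rewrite IH. destruct z as [a b], w as [c d], (Cpow (a, b) n) as [e f], (Cpow (c, d) n) as [g h].
   unfold Cmul; simpl. f_equal; ring.
Qed.

Lemma Cpow_Cexp z n : Cpow (Cexp z) n = Cexp (Cscale (INR n) z).
Proof.
 induction n as [|n IH]; simpl Cpow.
 - unfold Cexp, Cscale; simpl. rewrite !Rmult_0_l, exp_0, cos_0, sin_0. f_equal; ring.
 - rewrite IH, <- Cexp_add. destruct z.
   apply Cexp_ext; unfold Cadd, Cscale; cbn [fst snd]; rewrite S_INR; ring.
Qed.

Lemma Cnorm1_Cmul z w : Cnorm1 (Cmul z w) <= Cnorm1 z * Cnorm1 w.
Proof.
 destruct z as [a b], w as [c d]. unfold Cnorm1, Cmul; simpl. unfold Rminus.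
 pose proof (Rabs_triang (a * c) (- (b * d))); pose proof (Rabs_triang (a * d) (b * c)).
 rewrite Rabs_Ropp, !Rabs_mult in *. nra.
Qed.

Lemma Cnorm1_Cpow z n : Cnorm1 (Cpow z n) <= Cnorm1 z ^ n.
Proof.
 induction n as [|n IH]; simpl.
 - unfold Cnorm1; simpl. rewrite Rabs_R1, Rabs_R0. lra.
 - eapply Rle_trans; [apply Cnorm1_Cmul|].
   apply Rmult_le_compat_l; [apply Cnorm1_nonneg | exact IH].
Qed.

Lemma Cmul_Cexp_bound c u v :
  Rabs (fst (Cmul c (Cexp (u, v)))) <= Cnorm1 c * exp u /\
  Rabs (snd (Cmul c (Cexp (u, v)))) <= Cnorm1 c * exp u.
Proof.
 destruct c as [a b]. unfold Cnorm1, Cmul, Cexp; simpl. unfold Rminus.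
 assert (Hw : forall x w, Rabs w <= 1 -> Rabs (x * (exp u * w)) <= Rabs x * exp u).
 { intros x w Hw. pose proof (exp_pos u); pose proof (Rabs_pos x); pose proof (Rabs_pos w).
   rewrite !Rabs_mult, (Rabs_right (exp u)) by lra. apply Rmult_le_compat_l; [lra|].
   rewrite <- (Rmult_1_r (exp u)) at 2. apply Rmult_le_compat_l; lra. }
 assert (Hc : Rabs (cos v) <= 1) by (pose proof (COS_bound v); apply Rabs_le; lra).
 assert (Hs : Rabs (sin v) <= 1) by (pose proof (SIN_bound v); apply Rabs_le; lra).
 pose proof (Hw a _ Hc); pose proof (Hw a _ Hs); pose proof (Hw b _ Hc); pose proof (Hw b _ Hs).
 split; (eapply Rle_trans; [apply Rabs_triang|]); rewrite ?Rabs_Ropp; lra.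
Qed.

Lemma C_improper_ext f g I : (forall y, f y = g y) -> C_improper f I -> C_improper g I.
Proof. intros H; replace g with f by (apply functional_extensionality; auto); auto. Qed.

Lemma C_improper_Cmul c f I : C_improper f I -> C_improper (fun y => Cmul c (f y)) (Cmul c I).
Proof.
 rewrite !C_improper_iff. destruct c as [c1 c2]. intros [H1 H2]. unfold Cmul; simpl. split.
 - apply is_RInt_improper_ext with (fun y => c1 * fst (f y) + - c2 * snd (f y)); [intros; ring|].
   replace (c1 * fst I - c2 * snd I) with (c1 * fst I + - c2 * snd I) by ring.
   apply is_RInt_improper_lin; [apply is_RInt_improper_scal|]; assumption.
 - apply is_RInt_improper_ext with (fun y => c1 * snd (f y) + c2 * fst (f y)); [intros; ring|].
   apply is_RInt_improper_lin; [apply is_RInt_improper_scal|]; assumption.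
Qed.

Lemma C_improper_comp_shift f I c :
  continuity (fun y => fst (f y)) -> continuity (fun y => snd (f y)) ->
  C_improper f I -> C_improper (fun y => f (y + c)) I.
Proof.
 rewrite !C_improper_iff. intros Hc1 Hc2 [H1 H2].
 split; now apply (is_RInt_improper_comp_shift (fun y => _ (f y))).
Qed.

Theorem C_improper_gauss_fourier be :
  C_improper (fun y => Cexp (- (y ^ 2 / 2), be * y)) (sqrt (2 * PI) * exp (- (be ^ 2 / 2)), 0).
Proof.
 apply C_improper_iff. unfold Cexp; simpl.
 split; [apply is_RInt_improper_gauss_cos | apply is_RInt_improper_gauss_sin].
Qed.

(* Completing the square: the integrand is e^{al^2/2 + i al be} times the shift by -al of
   the Fourier integrand. *)
Theorem C_improper_gauss_exp al be :
  C_improper (fun y => Cexp (- (y ^ 2 / 2) + al * y, be * y))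
    (Cscale (sqrt (2 * PI)) (Cexp ((al ^ 2 - be ^ 2) / 2, al * be))).
Proof.
 set (c := Cexp (al ^ 2 / 2, al * be)).
 assert (H := C_improper_Cmul c _ _ (C_improper_gauss_fourier be)).
 apply C_improper_comp_shift with (c := - al) in H; [| unfold Cmul, Cexp; simpl; reg ..].
 replace (Cscale (sqrt (2 * PI)) (Cexp ((al ^ 2 - be ^ 2) / 2, al * be)))
   with (Cmul c (sqrt (2 * PI) * exp (- (be ^ 2 / 2)), 0)).
 - apply C_improper_ext with (2 := H). intros y. unfold c. rewrite <- Cexp_add.
   apply Cexp_ext; unfold Cadd; simpl; field.
 - unfold c. replace ((al ^ 2 - be ^ 2) / 2, al * be) with (Cadd (al ^ 2 / 2, al * be) (- (be ^ 2 / 2), 0))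
     by (unfold Cadd; simpl; f_equal; field).
   rewrite Cexp_add, Cexp_real. destruct (Cexp (al ^ 2 / 2, al * be)).
   unfold Cmul, Cscale; simpl. f_equal; ring.
Qed.

Corollary is_RInt_improper_gauss_exp al :
  is_RInt_improper (fun y => exp (- (y ^ 2 / 2) + al * y)) (sqrt (2 * PI) * exp (al ^ 2 / 2)).
Proof.
 destruct (proj1 (C_improper_iff _ _) (C_improper_gauss_exp al 0)) as [H _].
 unfold Cexp, Cscale in H; cbn [fst snd] in H.
 replace ((al ^ 2 - 0 ^ 2) / 2) with (al ^ 2 / 2) in H by field.
 rewrite Rmult_0_r, cos_0, Rmult_1_r in H.
 apply is_RInt_improper_ext with (2 := H). intros y. rewrite Rmult_0_l, cos_0. ring.
Qed.

Theorem C_tannery (f : nat -> R -> Cx) (h : nat -> R -> R) (F : R -> Cx) (I : nat -> Cx) (beta : nat -> R) :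
  (forall n, continuity (fun y => fst (f n y)) /\ continuity (fun y => snd (f n y))) ->
  (forall n y, Rabs (fst (f n y)) <= h n y /\ Rabs (snd (f n y)) <= h n y) ->
  (forall y, Csums (fun n => f n y) (F y)) ->
  (forall n, C_improper (f n) (I n)) ->
  (forall n, is_RInt_improper (h n) (beta n)) -> summable beta ->
  (forall r, exists m, summable m /\ forall n y, Rabs y <= r -> h n y <= m n) ->
  exists l, Csums I l /\ C_improper F l.
Proof.
 intros Hc Hh Hs Hi Hhi Hb Hloc.
 assert (Hs' := fun y => proj1 (Csums_iff _ _) (Hs y)).
 assert (Hi' := fun n => proj1 (C_improper_iff _ _) (Hi n)).
 destruct (tannery (fun n y => fst (f n y)) h (fun y => fst (F y)) (fun n => fst (I n)) beta
   (fun n => proj1 (Hc n)) (fun n y => proj1 (Hh n y)) (fun y => proj1 (Hs' y))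
   (fun n => proj1 (Hi' n)) Hhi Hb Hloc) as [l1 [Hl1 HF1]].
 destruct (tannery (fun n y => snd (f n y)) h (fun y => snd (F y)) (fun n => snd (I n)) beta
   (fun n => proj2 (Hc n)) (fun n y => proj2 (Hh n y)) (fun y => proj2 (Hs' y))
   (fun n => proj2 (Hi' n)) Hhi Hb Hloc) as [l2 [Hl2 HF2]].
 exists (l1, l2). split; [apply Csums_iff | apply C_improper_iff]; auto.
Qed.

(** * Term-by-term integration of E *)

(* Each factor satisfies p^{-l} - q^l = p^{-l} (1 - (pq)^l) >= p^{-l} (1 - pq). *)
Lemma pqfact_bound p q n : 0 < p -> 0 < p * q < 1 ->
  0 < pqfact p q n /\ (1 - p * q) ^ n <= pqfact p q n * sqrt p ^ (n * n + n).
Proof.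
 intros Hp Hpq. induction n as [|n [H1 H2]]; [simpl; lra|]. cbn [pqfact].
 set (d := / p ^ S n - q ^ S n).
 assert (Hps : 0 < p ^ S n) by now apply pow_lt.
 assert (Hd : 1 - p * q <= d * p ^ S n).
 { unfold d. rewrite Rmult_minus_distr_r, Rinv_l, <- Rpow_mult_distr, Rmult_comm by lra.
   simpl pow. assert ((q * p) ^ n <= 1) by (rewrite <- (pow1 n); apply pow_incr; lra). nra. }
 assert (Hd0 : 0 < d) by (apply (Rmult_lt_reg_r (p ^ S n)); lra).
 split; [now apply Rmult_lt_0_compat|].
 replace (S n * S n + S n)%nat with ((n * n + n) + 2 * S n)%nat by lia.
 rewrite pow_add, pow_mult. replace (sqrt p ^ 2) with p by (simpl; rewrite Rmult_1_r, sqrt_sqrt; lra).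
 assert (0 <= (1 - p * q) ^ n) by (apply pow_le; lra).
 apply Rle_trans with ((pqfact p q n * sqrt p ^ (n * n + n)) * (d * p ^ S n)).
 - rewrite <- tech_pow_Rmult, Rmult_comm. apply Rmult_le_compat; lra.
 - right. ring.
Qed.

Lemma inv_pqfact_le p q n : 0 < p -> 0 < p * q < 1 ->
  / pqfact p q n <= sqrt p ^ (n * n + n) / (1 - p * q) ^ n.
Proof.
 intros Hp Hpq. destruct (pqfact_bound p q n Hp Hpq) as [H1 H2].
 assert (0 < (1 - p * q) ^ n) by (apply pow_lt; lra).
 apply (Rmult_le_reg_r ((1 - p * q) ^ n)); auto. unfold Rdiv. rewrite Rmult_assoc, Rinv_l by lra.
 apply (Rmult_le_reg_l (pqfact p q n)); auto. rewrite <- Rmult_assoc, Rinv_r by lra. lra.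
Qed.

Section Main.

Variables (p k q zeta x : R) (rho t : Cx).
Hypothesis hp : 0 < p.
Hypothesis hk : 0 < k.
Hypothesis hpq0 : 0 < p * q.
Hypothesis hpq1 : p * q < 1.
Hypothesis hcond : p * exp (- ((2 * zeta - Cim rho ^ 2) * k ^ 2)) < 1.

Definition E_coef (n : nat) : Cx := Cscale (/ pqfact p q n * exp (- (k ^ 2 * INR n ^ 2) * zeta)) (Cpow t n).
Definition lin_re (n : nat) : R := - (INR n * k * Cim rho).
Definition lin_im (n : nat) : R := x + INR n * k * Cre rho.
Definition E_zeta_arg (y : R) : Cx := Cmul t (Cexp (Cscale (k * y) (Cmul Ci rho))).

Lemma Eterm_zeta n y : Eterm k p q (RtoC zeta) (E_zeta_arg y) n =
  Cmul (E_coef n) (Cexp (lin_re n * y, INR n * k * Cre rho * y)).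
Proof.
 unfold Eterm, E_zeta_arg, E_coef. rewrite Cpow_Cmul, Cpow_Cexp.
 replace (Cexp (Cscale (INR n) (Cscale (k * y) (Cmul Ci rho)))) with (Cexp (lin_re n * y, INR n * k * Cre rho * y))
   by (apply Cexp_ext; unfold lin_re, Cscale, Cmul, Ci, Cre, Cim; simpl; ring).
 replace (Cexp (Cscale (- (k ^ 2 * INR n ^ 2)) (RtoC zeta))) with (Cexp (- (k ^ 2 * INR n ^ 2) * zeta, 0))
   by (apply Cexp_ext; unfold Cscale, RtoC; simpl; ring).
 rewrite Cexp_real. destruct (Cpow t n), (Cexp (lin_re n * y, INR n * k * Cre rho * y)).
 unfold Cscale, Cmul; simpl. f_equal; ring.
Qed.

Lemma gauss_Eterm_zeta n y :
  Cmul (Cexp (- (y ^ 2 / 2), x * y)) (Eterm k p q (RtoC zeta) (E_zeta_arg y) n) =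
  Cmul (E_coef n) (Cexp (- (y ^ 2 / 2) + lin_re n * y, lin_im n * y)).
Proof.
 rewrite Eterm_zeta.
 replace (Cexp (- (y ^ 2 / 2) + lin_re n * y, lin_im n * y))
   with (Cmul (Cexp (- (y ^ 2 / 2), x * y)) (Cexp (lin_re n * y, INR n * k * Cre rho * y)))
   by (rewrite <- Cexp_add; apply Cexp_ext; unfold Cadd, lin_im; simpl; ring).
 destruct (E_coef n), (Cexp (- (y ^ 2 / 2), x * y)), (Cexp (lin_re n * y, INR n * k * Cre rho * y)).
 unfold Cmul; simpl. f_equal; ring.
Qed.

(* [sqrt (2 PI) * weight 0 n] bounds the integral of the n-th term, and
   [weight (k |Im rho| r) n] the n-th term itself on [-r, r]. *)
Definition weight (nu : R) (n : nat) : R := Cnorm1 (E_coef n) * exp (lin_re n ^ 2 / 2 + INR n * nu).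

Lemma weight_nonneg nu n : 0 <= weight nu n.
Proof. apply Rmult_le_pos; [apply Cnorm1_nonneg | left; apply exp_pos]. Qed.

Lemma Cnorm1_E_coef n :
  Cnorm1 (E_coef n) <= / pqfact p q n * exp (- (k ^ 2 * INR n ^ 2) * zeta) * Cnorm1 t ^ n.
Proof.
 destruct (pqfact_bound p q n hp (conj hpq0 hpq1)) as [H _].
 assert (HK : 0 < / pqfact p q n * exp (- (k ^ 2 * INR n ^ 2) * zeta))
   by (apply Rmult_lt_0_compat; [now apply Rinv_0_lt_compat | apply exp_pos]).
 unfold E_coef, Cnorm1, Cscale; cbn [fst snd].
 set (K := / pqfact p q n * exp (- (k ^ 2 * INR n ^ 2) * zeta)) in *.
 rewrite !(Rabs_mult K), (Rabs_right K), <- Rmult_plus_distr_l by lra.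
 apply Rmult_le_compat_l; [lra | apply Cnorm1_Cpow].
Qed.

(* [weight nu n] is at most lam^(n^2) mu^n, where lam^2 = p e^{-(2 zeta - (Im rho)^2) k^2} < 1. *)
Lemma summable_weight nu : 0 <= nu -> summable (weight nu).
Proof.
 intros Hnu.
 set (d := k ^ 2 * Cim rho ^ 2 / 2 - k ^ 2 * zeta). set (T := Cnorm1 t).
 set (lam := sqrt p * exp d). set (mu := sqrt p * T * exp nu / (1 - p * q)).
 assert (Hsp : 0 < sqrt p) by now apply sqrt_lt_R0.
 assert (HT : 0 <= T) by apply Cnorm1_nonneg.
 assert (Hlam : 0 <= lam < 1).
 { assert (lam * lam < 1).
   { replace (lam * lam) with ((sqrt p * sqrt p) * exp (d + d)) by (unfold lam; rewrite exp_plus; ring).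
     rewrite sqrt_sqrt by lra. replace (d + d) with (- ((2 * zeta - Cim rho ^ 2) * k ^ 2)) by (unfold d; field).
     exact hcond. }
   pose proof (exp_pos d). assert (0 <= lam) by (unfold lam; nra). nra. }
 assert (Hmu : 0 <= mu).
 { unfold mu. pose proof (exp_pos nu).
   repeat apply Rmult_le_pos; try lra. left; apply Rinv_0_lt_compat; lra. }
 apply summable_le with (fun n => lam ^ (n * n) * mu ^ n); [|now apply summable_pow_sq].
 intros n. split; [apply weight_nonneg|].
 assert (Hc : Cnorm1 (E_coef n) <= sqrt p ^ (n * n + n) / (1 - p * q) ^ n * exp (- (k ^ 2 * INR n ^ 2) * zeta) * T ^ n).
 { eapply Rle_trans; [apply Cnorm1_E_coef|]. pose proof (exp_pos (- (k ^ 2 * INR n ^ 2) * zeta)).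
   apply Rmult_le_compat_r; [now apply pow_le|]. apply Rmult_le_compat_r; [lra|].
   apply inv_pqfact_le; auto. }
 eapply Rle_trans; [apply Rmult_le_compat_r; [left; apply exp_pos | exact Hc]|].
 right. unfold lam, mu. unfold Rdiv. rewrite !Rpow_mult_distr, pow_inv, <- exp_mult_INR, <- exp_mult_INR.
 assert (E : exp (- (k ^ 2 * INR n ^ 2) * zeta) * exp (lin_re n ^ 2 * / 2 + INR n * nu)
   = exp (INR (n * n) * d) * exp (INR n * nu)).
 { rewrite <- !exp_plus, mult_INR. f_equal. unfold lin_re, d, Cim. field. }
 rewrite pow_add.
 transitivity (sqrt p ^ (n * n) * sqrt p ^ n * / (1 - p * q) ^ n * T ^ n *
   (exp (- (k ^ 2 * INR n ^ 2) * zeta) * exp (lin_re n ^ 2 * / 2 + INR n * nu))); [ring|].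
 rewrite E. ring.
Qed.

Lemma exp_lin_re_le n y r : Rabs y <= r ->
  exp (lin_re n * y) <= exp (lin_re n ^ 2 / 2 + INR n * (k * Rabs (Cim rho) * r)).
Proof.
 intros Hy. apply exp_le. pose proof (pow2_ge_0 (lin_re n)). pose proof (pos_INR n).
 assert (lin_re n * y <= INR n * (k * Rabs (Cim rho) * r)).
 { eapply Rle_trans; [apply Rle_abs|]. unfold lin_re.
   rewrite Rabs_mult, Rabs_Ropp, !Rabs_mult, (Rabs_right (INR n)), (Rabs_right k) by (apply Rle_ge; lra).
   rewrite <- !Rmult_assoc. apply Rmult_le_compat_l; [|exact Hy].
   pose proof (Rabs_pos (Cim rho)). repeat apply Rmult_le_pos; lra. }
 lra.
Qed.

Lemma Eterm_zeta_bound n y :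
  Rabs (fst (Eterm k p q (RtoC zeta) (E_zeta_arg y) n)) <= weight (k * Rabs (Cim rho) * Rabs y) n /\
  Rabs (snd (Eterm k p q (RtoC zeta) (E_zeta_arg y) n)) <= weight (k * Rabs (Cim rho) * Rabs y) n.
Proof.
 rewrite Eterm_zeta. destruct (Cmul_Cexp_bound (E_coef n) (lin_re n * y) (INR n * k * Cre rho * y)) as [H1 H2].
 assert (Cnorm1 (E_coef n) * exp (lin_re n * y) <= weight (k * Rabs (Cim rho) * Rabs y) n).
 { apply Rmult_le_compat_l; [apply Cnorm1_nonneg|apply exp_lin_re_le, Rle_refl]. }
 split; lra.
Qed.

Lemma ex_Csums_Eterm_zeta y : exists l, Csums (Eterm k p q (RtoC zeta) (E_zeta_arg y)) l.
Proof.
 apply Csums_abs_le with (b := weight (k * Rabs (Cim rho) * Rabs y)); [intros n; apply Eterm_zeta_bound|].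
 apply summable_weight. pose proof (Rabs_pos (Cim rho)); pose proof (Rabs_pos y).
 repeat apply Rmult_le_pos; lra.
Qed.

Definition E_zeta (y : R) : Cx :=
  epsilon (inhabits (0, 0)) (Csums (Eterm k p q (RtoC zeta) (E_zeta_arg y))).

Lemma Csums_E_zeta y : Csums (Eterm k p q (RtoC zeta) (E_zeta_arg y)) (E_zeta y).
Proof. unfold E_zeta. apply epsilon_spec, ex_Csums_Eterm_zeta. Qed.

Definition term_integral (n : nat) : Cx :=
  Cmul (E_coef n) (Cscale (sqrt (2 * PI)) (Cexp ((lin_re n ^ 2 - lin_im n ^ 2) / 2, lin_re n * lin_im n))).

Lemma C_improper_gauss_E_zeta : exists l, Csums term_integral l /\
  C_improper (fun y => Cmul (Cexp (- (y ^ 2 / 2), x * y)) (E_zeta y)) l.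
Proof.
 apply (C_tannery (fun n y => Cmul (E_coef n) (Cexp (- (y ^ 2 / 2) + lin_re n * y, lin_im n * y)))
   (fun n y => Cnorm1 (E_coef n) * exp (- (y ^ 2 / 2) + lin_re n * y)) _ _
   (fun n => Cnorm1 (E_coef n) * (sqrt (2 * PI) * exp (lin_re n ^ 2 / 2)))).
 - intros n. unfold Cmul, Cexp; simpl. split; reg.
 - intros n y. apply Cmul_Cexp_bound.
 - intros y.
   apply (Csums_ext (fun n => Cmul (Cexp (- (y ^ 2 / 2), x * y)) (Eterm k p q (RtoC zeta) (E_zeta_arg y) n)));
     [intros n; apply gauss_Eterm_zeta|].
   apply Csums_Cmul, Csums_E_zeta.
 - intros n. apply C_improper_Cmul, C_improper_gauss_exp.
 - intros n. apply is_RInt_improper_scal, is_RInt_improper_gauss_exp.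
 - destruct (summable_weight 0 ltac:(lra)) as [l Hl]. exists (sqrt (2 * PI) * l).
   apply Un_cv_sum_ext with (fun n => sqrt (2 * PI) * weight 0 n); [|now apply Un_cv_sum_scal].
   intros n. unfold weight. rewrite Rmult_0_r, Rplus_0_r. ring.
 - intros r. exists (weight (k * Rabs (Cim rho) * Rabs r)). split.
   + apply summable_weight. pose proof (Rabs_pos (Cim rho)); pose proof (Rabs_pos r).
     repeat apply Rmult_le_pos; lra.
   + intros n y Hy. apply Rmult_le_compat_l; [apply Cnorm1_nonneg|].
     eapply Rle_trans; [|apply (exp_lin_re_le n y); eapply Rle_trans; [exact Hy | apply Rle_abs]].
     apply exp_le. pose proof (pow2_ge_0 y). lra.
Qed.

Lemma term_integral_eq n :
  Cscale (sqrt (2 * PI) * exp (- (x ^ 2 / 2)))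
    (Eterm k p q (Cadd (RtoC zeta) (Cscale (/ 2) (Cmul rho rho))) (Cmul t (Cexp (Cscale (- (k * x)) rho))) n)
  = term_integral n.
Proof.
 unfold Eterm, term_integral, E_coef. rewrite Cpow_Cmul, Cpow_Cexp.
 set (A := Cscale (- (k ^ 2 * INR n ^ 2)) (Cadd (RtoC zeta) (Cscale (/ 2) (Cmul rho rho)))).
 set (B := Cscale (INR n) (Cscale (- (k * x)) rho)).
 set (D := ((lin_re n ^ 2 - lin_im n ^ 2) / 2, lin_re n * lin_im n)).
 set (c := / pqfact p q n). set (s := sqrt (2 * PI)).
 assert (E : Cadd (Cadd A B) (- (x ^ 2 / 2), 0) = Cadd (- (k ^ 2 * INR n ^ 2) * zeta, 0) D)
   by (unfold A, B, D, lin_re, lin_im, Cadd, Cscale, Cmul, RtoC, Cre, Cim; simpl; f_equal; field).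
 transitivity (Cscale (s * c) (Cmul (Cpow t n) (Cmul (Cmul (Cexp A) (Cexp B)) (exp (- (x ^ 2 / 2)), 0)))).
 { generalize (Cexp A) (Cexp B) (Cpow t n). intros [a1 a2] [b1 b2] [t1 t2].
   unfold Cscale, Cmul; simpl. f_equal; ring. }
 rewrite <- Cexp_real, <- !Cexp_add, E, Cexp_add, Cexp_real.
 generalize (Cexp D) (Cpow t n). intros [d1 d2] [t1 t2].
 unfold Cscale, Cmul; simpl. f_equal; ring.
Qed.

End Main.

Theorem mainTheorem7 (p k q zeta x : R) (rho t : Cx)
  (hp : 0 < p) (hk : 0 < k) (hq : q = p * exp (- (2 * k ^ 2)))
  (hpq0 : 0 < p * q) (hpq1 : p * q < 1)
  (hcond : p * exp (- ((2 * zeta - Cim rho ^ 2) * k ^ 2)) < 1) :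
  exists (L : Cx) (g : R -> Cx) (I : Cx),
    E_is k p q (Cadd (RtoC zeta) (Cscale (/ 2) (Cmul rho rho)))
         (Cmul t (Cexp (Cscale (- (k * x)) rho))) L /\
    (forall y : R, E_is k p q (RtoC zeta) (Cmul t (Cexp (Cscale (k * y) (Cmul Ci rho)))) (g y)) /\
    C_improper (fun y => Cmul (Cexp (- (y ^ 2 / 2), x * y)) (g y)) I /\
    Cscale (exp (- (x ^ 2 / 2))) L = Cscale (/ sqrt (2 * PI)) I.
Proof.
 destruct (C_improper_gauss_E_zeta p k q zeta x rho t hp hk hpq0 hpq1 hcond) as [l [Hl Hint]].
 set (K := sqrt (2 * PI) * exp (- (x ^ 2 / 2))).
 assert (Hs : 0 < sqrt (2 * PI)) by (apply sqrt_lt_R0; pose proof PI_RGT_0; lra).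
 assert (HK : 0 < K) by (apply Rmult_lt_0_compat; [exact Hs | apply exp_pos]).
 exists (Cscale (/ K) l), (E_zeta p k q zeta rho t), l.
 split; [|split; [|split]].
 - apply (Csums_ext (fun n => Cmul (RtoC (/ K)) (term_integral p k q zeta x rho t n))).
   + intros n. rewrite <- term_integral_eq, <- Cscale_RtoC. fold K.
     destruct (Eterm _ _ _ _ _ n). unfold Cscale; simpl. f_equal; field; lra.
   + rewrite Cscale_RtoC. now apply Csums_Cmul.
 - intros y. now apply Csums_E_zeta.
 - exact Hint.
 - unfold K, Cscale; cbn [fst snd]. pose proof (exp_pos (- (x ^ 2 / 2))). f_equal; field; lra.
Qed.
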